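(* Let $\mathbb U=\{z\in\mathbb C:|z|<1\}$, let $\psi\in H^2(\mathbb U)$ and let $\phi:\mathbb U\to\mathbb U$ be analytic with $\|\phi\|_\infty=\sup_{z\in\mathbb U}|\phi(z)|<1$. Then the weighted composition operator $T_{\psi,\phi}f=\psi\cdot(f\circ\phi)$ and the composition operator $C_\phi f=f\circ\phi$ are nuclear (trace class) on $H^2(\mathbb U)$, and \[ \|T_{\psi,\phi}\|_1\le\frac{\|\psi\|_{H^2(\mathbb U)}}{1-\|\phi\|_\infty}. \]
   Context: $H^2(\mathbb U)$ is the Hardy space of holomorphic $f$ on $\mathbb U$ with $\|f\|_{H^2(\mathbb U)}=\sup_{0\le r<1}\bigl(\frac1{2\pi}\int_0^{2\pi}|f(re^{it})|^2dt\bigr)^{1/2}<\infty$. $\|T\|_1=\mathrm{tr}(\sqrt{T^*T})$ denotes the trace norm. *)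

From Stdlib Require Import Reals.
From Coquelicot Require Import Coquelicot.
Open Scope R_scope.

Definition in_disk (z : C) : Prop := Cmod z < 1.

Definition holomorphic_on_disk (f : C -> C) : Prop :=
  forall z : C, in_disk z -> @ex_derive C_AbsRing C_NormedModule f z.

Definition circle_mean2 (f : C -> C) (r : R) : R :=
  / (2 * PI) * RInt (fun t => (Cmod (f (r * cos t, r * sin t)%R)) ^ 2) 0 (2 * PI).

Definition H2norm (f : C -> C) : Rbar :=
  Lub_Rbar (fun x => exists r : R, 0 <= r < 1 /\ x = sqrt (circle_mean2 f r)).

Definition in_H2 (f : C -> C) : Prop :=
  holomorphic_on_disk f /\ is_finite (H2norm f).

(** Real-valued H^2 norm (meaningful for f in H^2). *)
Definition H2n (f : C -> C) : R := real (H2norm f).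

Definition sup_disk (phi : C -> C) : Rbar :=
  Lub_Rbar (fun x => exists z : C, in_disk z /\ x = Cmod (phi z)).

Definition wcomp_op (psi phi : C -> C) (f : C -> C) : C -> C :=
  fun z => Cmult (psi z) (f (phi z)).
Definition comp_op (phi : C -> C) (f : C -> C) : C -> C :=
  fun z => f (phi z).

Definition H2_functional (L : (C -> C) -> C) : Prop :=
  (forall f g, in_H2 f -> in_H2 g ->
     L (fun z => Cplus (f z) (g z)) = Cplus (L f) (L g)) /\
  (forall (c : C) f, in_H2 f -> L (fun z => Cmult c (f z)) = Cmult c (L f)) /\
  (exists M : R, forall f, in_H2 f -> Cmod (L f) <= M * H2n f).

Definition fnorm (L : (C -> C) -> C) : Rbar :=
  Lub_Rbar (fun x => exists f, in_H2 f /\ H2n f <= 1 /\ x = Cmod (L f)).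

Fixpoint psum (a : nat -> C) (N : nat) : C :=
  match N with
  | O => RtoC 0
  | S n => Cplus (psum a n) (a n)
  end.

Definition nuclear_rep (T : (C -> C) -> (C -> C))
    (L : nat -> (C -> C) -> C) (y : nat -> C -> C) : Prop :=
  (forall n, H2_functional (L n)) /\
  (forall n, in_H2 (y n)) /\
  ex_series (fun n => real (fnorm (L n)) * H2n (y n)) /\
  (forall f, in_H2 f -> in_H2 (T f)) /\
  (forall f, in_H2 f ->
     is_lim_seq (fun N => H2n (fun z => Cminus (T f z) (psum (fun k => Cmult (L k f) (y k z)) N))) 0).

Definition nuclear (T : (C -> C) -> (C -> C)) : Prop :=
  exists L y, nuclear_rep T L y.

(** Nuclear norm = trace norm ||T||_1 (they coincide on Hilbert spaces). *)
Definition nuclear_norm (T : (C -> C) -> (C -> C)) : Rbar :=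
  Glb_Rbar (fun x => exists L y, nuclear_rep T L y /\
                       x = Series (fun n => real (fnorm (L n)) * H2n (y n))).

From Stdlib Require Import Reals Lra Psatz Classical ClassicalEpsilon FunctionalExtensionality.
From Coquelicot Require Import Coquelicot.
Open Scope R_scope.

(* Let s = sup |phi| < 1 and fix a radius s < r < 1.  Cauchy's formula on the circle
   |z| = r expands every f in H^2 as f(w) = sum_n c_n(f) w^n on |w| <= s with error
   O((s/r)^N), and Cauchy-Schwarz on that circle gives |c_n(f)| <= r^-n ||f||.
   Hence T f = sum_n c_n(f) (psi phi^n) in H^2 with ||psi phi^n|| <= s^n ||psi||:
   a nuclear representation of weight at most sum_n (s/r)^n ||psi|| = ||psi|| / (1 - s/r),
   and letting r -> 1 gives the bound.  Cauchy's formula comes from Goursat's lemma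
   for rectangles (allowing one point where only continuity is known), which yields
   a primitive on the disk and hence the vanishing of circle integrals of the
   difference quotient (f z - f w) / (z - w). *)

(** * Continuity and differentiability of complex-valued functions *)

Lemma norm_CR (x : C) : @norm R_AbsRing C_R_NormedModule x = Cmod x.
Proof.
  destruct x as [a b]. unfold norm; simpl. unfold prod_norm, Cmod; simpl.
  f_equal. unfold norm; simpl. unfold abs; simpl.
  rewrite !Rmult_1_r, <- !Rabs_mult, !Rabs_right; try ring; apply Rle_ge; nra.
Qed.

Lemma scal_CR (k : R) (v : C) : @scal R_Ring C_R_ModuleSpace k v = Cmult (RtoC k) v.
Proof.
  destruct v; unfold scal; simpl. unfold prod_scal, Cmult; simpl.
  unfold scal; simpl; unfold mult; simpl. f_equal; ring.
Qed.

Lemma Cmod_pair_le (a b : R) : Cmod (a, b) <= Rabs a + Rabs b.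
Proof.
  replace ((a, b) : C) with (RtoC a + Ci * RtoC b)%C
    by (apply injective_projections; simpl; ring).
  eapply Rle_trans. apply Cmod_triangle.
  rewrite Cmod_mult, Cmod_Ci, !Cmod_R. lra.
Qed.

(* Coquelicot equips [C] with two distinct uniform structures, the product one of
   [C_NormedModule] and that of [AbsRing_NormedModule C_AbsRing]; both resulting
   notions of complex derivative coincide with the epsilon-delta one below. *)
Definition cdiff (f : C -> C) (z l : C) : Prop :=
  forall eps, 0 < eps -> exists delta, 0 < delta /\
    forall w, Cmod (w - z) < delta -> Cmod (f w - f z - (w - z) * l) <= eps * Cmod (w - z).

Lemma is_derive_C_cdiff (f : C -> C) (z l : C) :
  @is_derive C_AbsRing C_NormedModule f z l <-> cdiff f z l.
Proof.
  split.
  - intros [_ H] eps Heps.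
    destruct (H z (fun P HP => HP) (mkposreal eps Heps)) as [d Hd].
    exists d. split; [apply cond_pos | exact Hd].
  - intros H. split; [apply is_linear_scal_l|].
    intros x Hx. apply (@is_filter_lim_locally_unique _ (AbsRing_NormedModule C_AbsRing)) in Hx.
    subst x. intros eps. destruct (H eps (cond_pos eps)) as [d [Hd Hd']].
    exists (mkposreal _ Hd). exact Hd'.
Qed.

Lemma is_derive_CA_cdiff (f : C -> C) (z l : C) :
  @is_derive C_AbsRing (AbsRing_NormedModule C_AbsRing) f z l <-> cdiff f z l.
Proof.
  split.
  - intros [_ H] eps Heps.
    destruct (H z (fun P HP => HP) (mkposreal eps Heps)) as [d Hd].
    exists d. split; [apply cond_pos | exact Hd].
  - intros H. split; [apply is_linear_scal_l|].
    intros x Hx. apply (@is_filter_lim_locally_unique _ (AbsRing_NormedModule C_AbsRing)) in Hx.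
    subst x. intros eps. destruct (H eps (cond_pos eps)) as [d [Hd Hd']].
    exists (mkposreal _ Hd). exact Hd'.
Qed.

Lemma is_derive_C_CA (f : C -> C) (z l : C) :
  @is_derive C_AbsRing C_NormedModule f z l <->
  @is_derive C_AbsRing (AbsRing_NormedModule C_AbsRing) f z l.
Proof. rewrite is_derive_C_cdiff, is_derive_CA_cdiff. reflexivity. Qed.

Definition holo_at (f : C -> C) (z : C) : Prop := @ex_derive C_AbsRing C_NormedModule f z.

Lemma holo_at_cdiff (f : C -> C) (z : C) : holo_at f z -> exists l, cdiff f z l.
Proof. intros [l Hl]. exists l. apply is_derive_C_cdiff, Hl. Qed.

Definition rdiff (g : R -> C) (t : R) (v : C) : Prop :=
  forall eps, 0 < eps -> exists delta, 0 < delta /\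
    forall s, Rabs (s - t) < delta -> Cmod (g s - g t - RtoC (s - t) * v) <= eps * Rabs (s - t).

Lemma is_derive_rdiff (g : R -> C) (t : R) (v : C) :
  rdiff g t v -> @is_derive R_AbsRing C_R_NormedModule g t v.
Proof.
  intros H. split; [apply is_linear_scal_l|].
  intros x Hx. apply (@is_filter_lim_locally_unique _ (AbsRing_NormedModule R_AbsRing)) in Hx.
  subst x. intros eps. destruct (H eps (cond_pos eps)) as [d [Hd Hd']].
  exists (mkposreal _ Hd). intros s Hs.
  rewrite norm_CR, scal_CR. apply Hd', Hs.
Qed.

Definition cont_at {T : Type} (dist : T -> T -> R) (g : T -> C) (t : T) : Prop :=
  forall eps, 0 < eps -> exists delta, 0 < delta /\
    forall s, dist s t < delta -> Cmod (g s - g t) < eps.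

Definition rcont : (R -> C) -> R -> Prop := cont_at (fun s t => Rabs (s - t)).
Definition ccont : (C -> C) -> C -> Prop := cont_at (fun w z => Cmod (w - z)).

Section ContAt.

Context {T : Type} (dist : T -> T -> R) (t : T).

Lemma cont_at_const (c : C) : cont_at dist (fun _ => c) t.
Proof.
  intros eps Heps. exists 1. split; [lra|]. intros s _.
  replace (c - c)%C with (RtoC 0) by ring. rewrite Cmod_0. exact Heps.
Qed.

Lemma cont_at_plus (f g : T -> C) :
  cont_at dist f t -> cont_at dist g t -> cont_at dist (fun s => (f s + g s)%C) t.
Proof.
  intros Hf Hg eps Heps.
  destruct (Hf (eps / 2)) as [d1 [Hd1 K1]]; [lra|].
  destruct (Hg (eps / 2)) as [d2 [Hd2 K2]]; [lra|].
  exists (Rmin d1 d2). split; [apply Rmin_pos; auto|]. intros s Hs.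
  replace (f s + g s - (f t + g t))%C with ((f s - f t) + (g s - g t))%C by ring.
  eapply Rle_lt_trans; [apply Cmod_triangle|].
  assert (A := K1 s (Rlt_le_trans _ _ _ Hs (Rmin_l _ _))).
  assert (B := K2 s (Rlt_le_trans _ _ _ Hs (Rmin_r _ _))). lra.
Qed.

Lemma cont_at_opp (f : T -> C) : cont_at dist f t -> cont_at dist (fun s => (- f s)%C) t.
Proof.
  intros Hf eps Heps. destruct (Hf eps Heps) as [d [Hd K]]. exists d. split; auto.
  intros s Hs. replace (- f s - - f t)%C with (- (f s - f t))%C by ring.
  rewrite Cmod_opp. auto.
Qed.

Lemma cont_at_minus (f g : T -> C) :
  cont_at dist f t -> cont_at dist g t -> cont_at dist (fun s => (f s - g s)%C) t.
Proof. intros Hf Hg. apply cont_at_plus; [|apply cont_at_opp]; assumption. Qed.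

Lemma cont_at_mult (f g : T -> C) :
  cont_at dist f t -> cont_at dist g t -> cont_at dist (fun s => (f s * g s)%C) t.
Proof.
  intros Hf Hg eps Heps.
  set (A := Cmod (f t)). set (B := Cmod (g t)).
  assert (HA : 0 <= A) by apply Cmod_ge_0. assert (HB : 0 <= B) by apply Cmod_ge_0.
  set (e := Rmin 1 (eps / (A + B + 1))).
  assert (He : 0 < e) by (apply Rmin_pos; [lra | apply Rdiv_lt_0_compat; lra]).
  assert (He1 : e <= 1) by apply Rmin_l.
  assert (He2 : e * (A + B + 1) <= eps).
  { apply Rle_trans with (eps / (A + B + 1) * (A + B + 1)).
    - apply Rmult_le_compat_r; [lra | apply Rmin_r].
    - right. field. lra. }
  destruct (Hf e He) as [d1 [Hd1 K1]]. destruct (Hg e He) as [d2 [Hd2 K2]].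
  exists (Rmin d1 d2). split; [apply Rmin_pos; auto|]. intros s Hs.
  assert (X := K1 s (Rlt_le_trans _ _ _ Hs (Rmin_l _ _))).
  assert (Y := K2 s (Rlt_le_trans _ _ _ Hs (Rmin_r _ _))).
  replace (f s * g s - f t * g t)%C
    with ((f s - f t) * (g s - g t) + (f s - f t) * g t + f t * (g s - g t))%C by ring.
  eapply Rle_lt_trans; [apply Cmod_triangle|].
  eapply Rle_lt_trans; [apply Rplus_le_compat_r, Cmod_triangle|].
  rewrite !Cmod_mult. fold A B.
  pose proof (Cmod_ge_0 (f s - f t)). pose proof (Cmod_ge_0 (g s - g t)).
  assert (Cmod (f s - f t) * Cmod (g s - g t) <= Cmod (f s - f t) * 1)
    by (apply Rmult_le_compat_l; lra).
  assert (Cmod (f s - f t) * B <= e * B) by (apply Rmult_le_compat_r; lra).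
  assert (A * Cmod (g s - g t) <= A * e) by (apply Rmult_le_compat_l; lra).
  lra.
Qed.

Lemma cont_at_pow (f : T -> C) (n : nat) :
  cont_at dist f t -> cont_at dist (fun s => Cpow (f s) n) t.
Proof. intros Hf. induction n as [|n IH]; simpl; [apply cont_at_const | apply cont_at_mult; auto]. Qed.

Lemma cont_at_comp (g : C -> C) (gam : T -> C) :
  cont_at dist gam t -> ccont g (gam t) -> cont_at dist (fun s => g (gam s)) t.
Proof.
  intros Hgam Hg eps Heps. destruct (Hg eps Heps) as [d [Hd K]].
  destruct (Hgam d Hd) as [d' [Hd' K']]. exists d'. split; auto.
Qed.

End ContAt.

Lemma continuous_of_rcont (g : R -> C) (t : R) : rcont g t -> continuous g t.
Proof.
  intros H P [e He]. destruct (H e (cond_pos e)) as [d [Hd K]].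
  exists (mkposreal d Hd). intros s Hs. apply He, C_NormedModule_mixin_compat1, K, Hs.
Qed.

Lemma continuity_pt_Cmod (h : R -> C) (t : R) :
  rcont h t -> continuity_pt (fun s => Cmod (h s)) t.
Proof.
  intros Hh eps Heps. destruct (Hh eps Heps) as [d [Hd K]]. exists d. split; auto.
  intros s [_ Hs]. eapply Rle_lt_trans; [|apply (K s Hs)].
  assert (T1 := Cmod_triangle (h s - h t) (h t)).
  assert (T2 := Cmod_triangle (- (h s - h t)) (h s)).
  replace (h s - h t + h t)%C with (h s) in T1 by ring.
  replace (- (h s - h t) + h s)%C with (h t) in T2 by ring.
  rewrite Cmod_opp in T2. apply Rabs_le. lra.
Qed.

Lemma rcont_pair (u v : R -> R) (t : R) :
  continuity_pt u t -> continuity_pt v t -> rcont (fun s => (u s, v s)) t.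
Proof.
  intros Hu Hv eps Heps.
  destruct (Hu (eps / 2)) as [d1 [Hd1 K1]]; [lra|].
  destruct (Hv (eps / 2)) as [d2 [Hd2 K2]]; [lra|].
  exists (Rmin d1 d2). split; [apply Rmin_pos; lra|]. intros s Hs.
  assert (Near : forall (w : R -> R) d, (forall x, D_x no_cond t x /\ R_dist x t < d ->
      R_dist (w x) (w t) < eps / 2) -> Rabs (s - t) < d -> Rabs (w s - w t) < eps / 2).
  { intros w d K Hsd. destruct (Req_dec s t) as [->|Hst].
    - rewrite Rminus_diag, Rabs_R0. lra.
    - apply K. repeat split; auto. }
  assert (X := Near u d1 K1 (Rlt_le_trans _ _ _ Hs (Rmin_l _ _))).
  assert (Y := Near v d2 K2 (Rlt_le_trans _ _ _ Hs (Rmin_r _ _))).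
  replace ((u s, v s) - (u t, v t))%C with (((u s - u t)%R, (v s - v t)%R) : C)
    by (apply injective_projections; simpl; ring).
  eapply Rle_lt_trans; [apply Cmod_pair_le|]. lra.
Qed.

Lemma ccont_of_cdiff (g : C -> C) (z l : C) : cdiff g z l -> ccont g z.
Proof.
  intros Hl eps Heps. destruct (Hl 1 Rlt_0_1) as [d [Hd H]].
  set (k := Cmod l + 2). assert (Hk : 0 < k) by (unfold k; pose proof (Cmod_ge_0 l); lra).
  exists (Rmin d (eps / k)). split; [apply Rmin_pos; auto; apply Rdiv_lt_0_compat; lra|].
  intros w Hw.
  assert (Hw1 : Cmod (w - z) < d) by (eapply Rlt_le_trans; [exact Hw | apply Rmin_l]).
  assert (Hw2 : Cmod (w - z) * k < eps).
  { apply Rmult_lt_reg_r with (/ k); [apply Rinv_0_lt_compat; lra|].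
    rewrite Rmult_assoc, Rinv_r, Rmult_1_r by lra.
    eapply Rlt_le_trans; [exact Hw | apply Rmin_r]. }
  specialize (H w Hw1).
  replace (g w - g z)%C with ((g w - g z - (w - z) * l) + (w - z) * l)%C by ring.
  eapply Rle_lt_trans; [apply Cmod_triangle|]. rewrite Cmod_mult.
  pose proof (Cmod_ge_0 (w - z)). unfold k in Hw2. nra.
Qed.

Lemma ccont_of_holo_at (g : C -> C) (z : C) : holo_at g z -> ccont g z.
Proof. intros Hg. destruct (holo_at_cdiff g z Hg) as [l Hl]. exact (ccont_of_cdiff g z l Hl). Qed.

Lemma ccont_affine (al be : C) (z : C) : ccont (fun w => (al + be * w)%C) z.
Proof.
  apply (ccont_of_cdiff _ z be). intros eps Heps. exists 1. split; [lra|]. intros w _.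
  replace (al + be * w - (al + be * z) - (w - z) * be)%C with (RtoC 0) by ring.
  rewrite Cmod_0. pose proof (Cmod_ge_0 (w - z)). nra.
Qed.

Lemma holo_at_mult (f g : C -> C) (z : C) :
  holo_at f z -> holo_at g z -> holo_at (fun y => (f y * g y)%C) z.
Proof.
  intros [a Ha] [b Hb]. eexists. apply is_derive_C_CA.
  apply (@is_derive_mult C_AbsRing f g); [apply is_derive_C_CA; eauto .. | apply Cmult_comm].
Qed.

Lemma holo_at_plus (f g : C -> C) (z : C) :
  holo_at f z -> holo_at g z -> holo_at (fun y => (f y + g y)%C) z.
Proof.
  intros [a Ha] [b Hb]. eexists. apply is_derive_C_CA.
  apply (@is_derive_plus C_AbsRing (AbsRing_NormedModule C_AbsRing) f g); apply is_derive_C_CA; eauto.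
Qed.

Lemma holo_at_minus (f g : C -> C) (z : C) :
  holo_at f z -> holo_at g z -> holo_at (fun y => (f y - g y)%C) z.
Proof.
  intros [a Ha] [b Hb]. eexists. apply is_derive_C_CA.
  apply (@is_derive_minus C_AbsRing (AbsRing_NormedModule C_AbsRing) f g); apply is_derive_C_CA; eauto.
Qed.

Lemma holo_at_id (z : C) : holo_at (fun y => y) z.
Proof. eexists. apply is_derive_C_CA, (@is_derive_id C_AbsRing). Qed.

Lemma holo_at_const (c z : C) : holo_at (fun _ => c) z.
Proof. eexists. apply is_derive_C_CA, (@is_derive_const C_AbsRing (AbsRing_NormedModule C_AbsRing)). Qed.

Lemma holo_at_comp (f g : C -> C) (z : C) :
  holo_at g z -> holo_at f (g z) -> holo_at (fun y => f (g y)) z.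
Proof.
  intros [b Hb] [a Ha]. eexists. apply is_derive_C_CA.
  apply (@is_derive_comp C_AbsRing (AbsRing_NormedModule C_AbsRing) f g); apply is_derive_C_CA; eauto.
Qed.

Lemma holo_at_pow (f : C -> C) (z : C) (n : nat) : holo_at f z -> holo_at (fun y => Cpow (f y) n) z.
Proof. intros H. induction n; simpl; [apply holo_at_const | apply holo_at_mult; auto]. Qed.

Lemma Cminus_neq_0 (x y : C) : x <> y -> (x - y)%C <> RtoC 0.
Proof. intros H E. apply H. replace x with (x - y + y)%C by ring. rewrite E. ring. Qed.

(** * Integrals of complex-valued functions *)

Notation CRInt := (@RInt C_R_CompleteNormedModule).
Notation CexRInt := (@ex_RInt C_R_NormedModule).
Notation CisRInt := (@is_RInt C_R_NormedModule).

Lemma is_RInt_C_fst (f : R -> C) a b (l : C) :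
  CisRInt f a b l -> is_RInt (fun t => fst (f t)) a b (fst l).
Proof. exact (@is_RInt_fct_extend_fst R_NormedModule R_NormedModule f a b l). Qed.

Lemma is_RInt_C_snd (f : R -> C) a b (l : C) :
  CisRInt f a b l -> is_RInt (fun t => snd (f t)) a b (snd l).
Proof. exact (@is_RInt_fct_extend_snd R_NormedModule R_NormedModule f a b l). Qed.

Lemma is_RInt_C_pair (f : R -> C) a b (l1 l2 : R) :
  is_RInt (fun t => fst (f t)) a b l1 -> is_RInt (fun t => snd (f t)) a b l2 ->
  CisRInt f a b (l1, l2).
Proof. exact (@is_RInt_fct_extend_pair R_NormedModule R_NormedModule f a b l1 l2). Qed.

Lemma is_RInt_lincomb (g h : R -> R) a b lg lh p q :
  is_RInt g a b lg -> is_RInt h a b lh ->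
  is_RInt (fun t => p * g t + q * h t) a b (p * lg + q * lh).
Proof.
  intros Hg Hh.
  apply (@is_RInt_plus R_NormedModule (fun t => scal p (g t)) (fun t => scal q (h t)));
    apply (@is_RInt_scal R_NormedModule); assumption.
Qed.

Lemma is_RInt_Cmult (f : R -> C) a b (l c : C) :
  CisRInt f a b l -> CisRInt (fun t => (c * f t)%C) a b (c * l)%C.
Proof.
  intros H. destruct c as [c1 c2], l as [l1 l2].
  assert (H1 := is_RInt_C_fst _ _ _ _ H). assert (H2 := is_RInt_C_snd _ _ _ _ H).
  simpl in H1, H2. apply is_RInt_C_pair; simpl.
  - replace (c1 * l1 - c2 * l2) with (c1 * l1 + (- c2) * l2) by ring.
    apply (is_RInt_ext (fun t => c1 * fst (f t) + (- c2) * snd (f t))).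
    + intros; simpl; ring.
    + apply is_RInt_lincomb; assumption.
  - apply (is_RInt_ext (fun t => c1 * snd (f t) + c2 * fst (f t))).
    + intros; simpl; ring.
    + apply is_RInt_lincomb; assumption.
Qed.

Lemma ex_RInt_Cmult (f : R -> C) a b (c : C) :
  CexRInt f a b -> CexRInt (fun t => (c * f t)%C) a b.
Proof. intros [l H]. exists (c * l)%C. apply is_RInt_Cmult, H. Qed.

Lemma CRInt_unique (f : R -> C) a b l : CisRInt f a b l -> CRInt f a b = l.
Proof. apply (@is_RInt_unique C_R_CompleteNormedModule). Qed.

Lemma CRInt_correct (f : R -> C) a b : CexRInt f a b -> CisRInt f a b (CRInt f a b).
Proof. apply (@RInt_correct C_R_CompleteNormedModule). Qed.

Lemma CRInt_Cmult (f : R -> C) a b (c : C) :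
  CexRInt f a b -> CRInt (fun t => (c * f t)%C) a b = (c * CRInt f a b)%C.
Proof. intros H. apply CRInt_unique, is_RInt_Cmult, CRInt_correct, H. Qed.

Lemma CRInt_ext (f g : R -> C) a b : (forall x, f x = g x) -> CRInt f a b = CRInt g a b.
Proof. intros H. apply (@RInt_ext C_R_CompleteNormedModule). auto. Qed.

Lemma CRInt_point (f : R -> C) a : CRInt f a a = RtoC 0.
Proof. apply (@RInt_point C_R_CompleteNormedModule). Qed.

Lemma CRInt_Chasles (f : R -> C) a b c :
  CexRInt f a b -> CexRInt f b c -> (CRInt f a b + CRInt f b c)%C = CRInt f a c.
Proof. apply (@RInt_Chasles C_R_CompleteNormedModule). Qed.

Lemma CRInt_swap (f : R -> C) a b : CexRInt f a b -> CRInt f b a = (- CRInt f a b)%C.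
Proof. intros H. symmetry. apply (@opp_RInt_swap C_R_CompleteNormedModule), H. Qed.

Lemma CRInt_plus (f g : R -> C) a b : CexRInt f a b -> CexRInt g a b ->
  CRInt (fun t => (f t + g t)%C) a b = (CRInt f a b + CRInt g a b)%C.
Proof. apply (@RInt_plus C_R_CompleteNormedModule). Qed.

Lemma CRInt_minus (f g : R -> C) a b : CexRInt f a b -> CexRInt g a b ->
  CRInt (fun t => (f t - g t)%C) a b = (CRInt f a b - CRInt g a b)%C.
Proof. apply (@RInt_minus C_R_CompleteNormedModule). Qed.

Lemma CRInt_const (c : C) a b : CRInt (fun _ => c) a b = (RtoC (b - a) * c)%C.
Proof. rewrite (@RInt_const C_R_CompleteNormedModule). apply scal_CR. Qed.

Lemma CRInt_minus_const (f : R -> C) a b (k : C) : CexRInt f a b ->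
  CRInt (fun t => (f t - k)%C) a b = (CRInt f a b - RtoC (b - a) * k)%C.
Proof.
  intros H. rewrite CRInt_minus, CRInt_const; auto.
  apply (@ex_RInt_const C_R_CompleteNormedModule).
Qed.

Lemma ex_RInt_of_rcont (g : R -> C) a b :
  (forall t, Rmin a b <= t <= Rmax a b -> rcont g t) -> CexRInt g a b.
Proof.
  intros H. apply (@ex_RInt_continuous C_R_CompleteNormedModule).
  intros t Ht. apply continuous_of_rcont, H, Ht.
Qed.

Lemma Cmod_CRInt_le_const (f : R -> C) a b M : CexRInt f a b ->
  (forall x, Rmin a b <= x <= Rmax a b -> Cmod (f x) <= M) ->
  Cmod (CRInt f a b) <= Rabs (b - a) * M.
Proof.
  intros Hf HM.
  assert (Ordered : forall a b, a <= b -> CexRInt f a b ->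
      (forall x, a <= x <= b -> Cmod (f x) <= M) -> Cmod (CRInt f a b) <= (b - a) * M).
  { clear. intros a b Hab Hf HM. rewrite <- norm_CR.
    apply (@norm_RInt_le_const C_R_NormedModule f a b); auto.
    - intros x Hx. rewrite norm_CR. auto.
    - apply CRInt_correct, Hf. }
  destruct (Rle_lt_dec a b).
  - rewrite Rabs_right by lra. apply Ordered; auto.
    intros; apply HM. rewrite Rmin_left, Rmax_right; lra.
  - assert (Hf' : CexRInt f b a) by (apply (@ex_RInt_swap C_R_CompleteNormedModule); auto).
    rewrite (CRInt_swap f b a Hf'), Cmod_opp, Rabs_left by lra.
    replace (- (b - a)) with (a - b) by ring. apply Ordered; [lra | auto|].
    intros; apply HM. rewrite Rmin_right, Rmax_left; lra.
Qed.

Lemma Cmod_CRInt_sub_const_le (f : R -> C) a b (c : C) e : CexRInt f a b ->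
  (forall x, Rmin a b <= x <= Rmax a b -> Cmod (f x - c) <= e) ->
  Cmod (CRInt f a b - RtoC (b - a) * c) <= Rabs (b - a) * e.
Proof.
  intros Hf Hclose. rewrite <- CRInt_minus_const by exact Hf.
  apply Cmod_CRInt_le_const; [|exact Hclose].
  apply (@ex_RInt_minus C_R_CompleteNormedModule); [exact Hf | apply (@ex_RInt_const C_R_CompleteNormedModule)].
Qed.

(* Rotating the integral onto the positive real axis reduces the bound to one
   on real parts. *)
Lemma Cmod_CRInt_le (f : R -> C) a b :
  a <= b -> CexRInt f a b -> ex_RInt (fun t => Cmod (f t)) a b ->
  Cmod (CRInt f a b) <= RInt (fun t => Cmod (f t)) a b.
Proof.
  intros Hab Hf Hm. set (J := CRInt f a b).
  destruct (Req_dec (Cmod J) 0) as [E|E].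
  { rewrite E. apply RInt_ge_0; auto. intros; apply Cmod_ge_0. }
  set (u := (/ RtoC (Cmod J) * Cconj J)%C).
  assert (HuJ : (u * J)%C = RtoC (Cmod J)).
  { unfold u. rewrite <- Cmult_assoc, (Cmult_comm (Cconj J)), <- Cmod2_conj.
    rewrite <- RtoC_inv, <- RtoC_mult by auto. f_equal. field. auto. }
  assert (Hu : Cmod u = 1).
  { unfold u. rewrite Cmod_mult, Cmod_conj, <- RtoC_inv, Cmod_R by auto.
    rewrite Rabs_right; [field; auto|].
    apply Rle_ge, Rlt_le, Rinv_0_lt_compat. pose proof (Cmod_ge_0 J); lra. }
  assert (Huf : CexRInt (fun t => (u * f t)%C) a b) by (apply ex_RInt_Cmult, Hf).
  transitivity (RInt (fun t => fst (u * f t)%C) a b).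
  - rewrite (is_RInt_unique _ _ _ _ (is_RInt_C_fst _ _ _ _ (CRInt_correct _ _ _ Huf))).
    unfold J. rewrite CRInt_Cmult by auto. fold J. rewrite HuJ. simpl. lra.
  - apply RInt_le; auto.
    + destruct Huf as [l Hl]. exists (fst l). apply is_RInt_C_fst, Hl.
    + intros t _. eapply Rle_trans; [apply Rle_abs|]. eapply Rle_trans; [apply re_le_Cmod|].
      rewrite Cmod_mult, Hu. lra.
Qed.

(** * Paths and the fundamental theorem of calculus *)

Lemma rdiff_comp (G : C -> C) (gam : R -> C) (t : R) (v l : C) :
  rdiff gam t v -> cdiff G (gam t) l -> rdiff (fun s => G (gam s)) t (l * v)%C.
Proof.
  intros Hg HG eps Heps.
  set (A := Cmod v + 1). assert (HA : 0 < A) by (unfold A; pose proof (Cmod_ge_0 v); lra).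
  set (L := Cmod l + 1). assert (HL : 0 < L) by (unfold L; pose proof (Cmod_ge_0 l); lra).
  destruct (HG (eps / (2 * A))) as [dG [HdG KG]]; [apply Rdiv_lt_0_compat; lra|].
  destruct (Hg (Rmin 1 (eps / (2 * L)))) as [dg [Hdg Kg]].
  { apply Rmin_pos; [lra | apply Rdiv_lt_0_compat; lra]. }
  exists (Rmin dg (dG / A)). split; [apply Rmin_pos; [auto | apply Rdiv_lt_0_compat; lra]|].
  intros s Hs. specialize (Kg s (Rlt_le_trans _ _ _ Hs (Rmin_l _ _))).
  assert (Hs2 : Rabs (s - t) * A < dG).
  { apply Rmult_lt_reg_r with (/ A); [apply Rinv_0_lt_compat; lra|].
    rewrite Rmult_assoc, Rinv_r, Rmult_1_r by lra.
    eapply Rlt_le_trans; [exact Hs | apply Rmin_r]. }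
  pose proof (Rabs_pos (s - t)).
  set (err := (gam s - gam t - RtoC (s - t) * v)%C) in Kg.
  assert (Kg1 : Cmod err <= Rabs (s - t))
    by (eapply Rle_trans; [exact Kg|]; rewrite <- (Rmult_1_l (Rabs _)) at 2;
        apply Rmult_le_compat_r; [auto | apply Rmin_l]).
  assert (Kg2 : Cmod err <= eps / (2 * L) * Rabs (s - t))
    by (eapply Rle_trans; [exact Kg|]; apply Rmult_le_compat_r; [auto | apply Rmin_r]).
  assert (Dg : Cmod (gam s - gam t) <= A * Rabs (s - t)).
  { replace (gam s - gam t)%C with (err + RtoC (s - t) * v)%C by (unfold err; ring).
    eapply Rle_trans; [apply Cmod_triangle|]. rewrite Cmod_mult, Cmod_R. unfold A. lra. }
  specialize (KG (gam s) ltac:(nra)).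
  replace (G (gam s) - G (gam t) - RtoC (s - t) * (l * v))%C
    with ((G (gam s) - G (gam t) - (gam s - gam t) * l) + l * err)%C by (unfold err; ring).
  eapply Rle_trans; [apply Cmod_triangle|]. rewrite Cmod_mult.
  assert (X1 : eps / (2 * A) * Cmod (gam s - gam t) <= eps / 2 * Rabs (s - t)).
  { apply Rle_trans with (eps / (2 * A) * (A * Rabs (s - t))).
    - apply Rmult_le_compat_l; [apply Rlt_le, Rdiv_lt_0_compat; lra | auto].
    - right. field. lra. }
  assert (X2 : Cmod l * Cmod err <= eps / 2 * Rabs (s - t)).
  { apply Rle_trans with (L * (eps / (2 * L) * Rabs (s - t))).
    - apply Rmult_le_compat; [apply Cmod_ge_0 | apply Cmod_ge_0 | unfold L; lra | auto].
    - right. field. lra. }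
  lra.
Qed.

Lemma rdiff_line (gam : R -> C) (t : R) (v : C) :
  (forall s, (gam s - gam t)%C = (RtoC (s - t) * v)%C) -> rdiff gam t v.
Proof.
  intros H eps Heps. exists 1. split; [lra|]. intros s _.
  rewrite H. replace (RtoC (s - t) * v - RtoC (s - t) * v)%C with (RtoC 0) by ring.
  rewrite Cmod_0. pose proof (Rabs_pos (s - t)). nra.
Qed.

Lemma CRInt_comp_deriv (G g : C -> C) (gam dgam : R -> C) a b :
  (forall t, Rmin a b <= t <= Rmax a b ->
     rdiff gam t (dgam t) /\ cdiff G (gam t) (g (gam t)) /\
     rcont (fun s => (g (gam s) * dgam s)%C) t) ->
  CRInt (fun t => (g (gam t) * dgam t)%C) a b = (G (gam b) - G (gam a))%C.
Proof.
  intros H. apply CRInt_unique.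
  change (G (gam b) - G (gam a))%C
    with (@minus C_R_NormedModule (G (gam b)) (G (gam a))).
  apply (@is_RInt_derive C_R_CompleteNormedModule (fun t => G (gam t))); intros t Ht;
    destruct (H t Ht) as [Hgam [HG Hc]].
  - apply is_derive_rdiff, rdiff_comp; assumption.
  - apply continuous_of_rcont, Hc.
Qed.

(** * Integrals over the boundary of a rectangle *)

(* [\oint g dz] over the boundary of [[a,b] x [c,d]], counterclockwise when [a <= b], [c <= d]. *)
Definition Irect (g : C -> C) (a b c d : R) : C :=
  (CRInt (fun x => g (x, c)) a b + Ci * CRInt (fun y => g (b, y)) c d
   - CRInt (fun x => g (x, d)) a b - Ci * CRInt (fun y => g (a, y)) c d)%C.

Definition inrect (a b c d : R) (z : C) : Prop :=
  Rmin a b <= fst z <= Rmax a b /\ Rmin c d <= snd z <= Rmax c d.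

Definition ccont_on_rect (g : C -> C) (a b c d : R) : Prop :=
  forall z, inrect a b c d z -> ccont g z.

Definition holo_on_rect (g : C -> C) (a b c d : R) : Prop :=
  forall z, inrect a b c d z -> holo_at g z.

Ltac minmax_lra := intros; unfold inrect, Rmin, Rmax in *; simpl in *; repeat destruct Rle_dec; lra.

Lemma rcont_hpath (y t : R) : rcont (fun s => ((s, y) : C)) t.
Proof. apply rcont_pair; [apply continuity_pt_id | apply continuity_pt_const; now intros ? ?]. Qed.

Lemma rcont_vpath (x t : R) : rcont (fun s => ((x, s) : C)) t.
Proof. apply rcont_pair; [apply continuity_pt_const; now intros ? ? | apply continuity_pt_id]. Qed.

Lemma ex_RInt_hedge (g : C -> C) a b y :
  (forall x, Rmin a b <= x <= Rmax a b -> ccont g (x, y)) -> CexRInt (fun x => g (x, y)) a b.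
Proof.
  intros H. apply ex_RInt_of_rcont. intros t Ht.
  apply (cont_at_comp _ _ g (fun x => (x, y))); [apply rcont_hpath | apply H, Ht].
Qed.

Lemma ex_RInt_vedge (g : C -> C) x c d :
  (forall y, Rmin c d <= y <= Rmax c d -> ccont g (x, y)) -> CexRInt (fun y => g (x, y)) c d.
Proof.
  intros H. apply ex_RInt_of_rcont. intros t Ht.
  apply (cont_at_comp _ _ g (fun y => (x, y))); [apply rcont_vpath | apply H, Ht].
Qed.

Lemma ex_RInt_rect_edges (g : C -> C) a b c d : ccont_on_rect g a b c d ->
  CexRInt (fun x => g (x, c)) a b /\ CexRInt (fun x => g (x, d)) a b /\
  CexRInt (fun y => g (a, y)) c d /\ CexRInt (fun y => g (b, y)) c d.
Proof.
  intros H. repeat split; [apply ex_RInt_hedge | apply ex_RInt_hedge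
    | apply ex_RInt_vedge | apply ex_RInt_vedge]; intros; apply H; minmax_lra.
Qed.

Lemma ccont_on_rect_sub (g : C -> C) a b c d a' b' c' d' :
  (forall z, inrect a' b' c' d' z -> inrect a b c d z) ->
  ccont_on_rect g a b c d -> ccont_on_rect g a' b' c' d'.
Proof. intros Hs H z Hz. apply H, Hs, Hz. Qed.

Lemma holo_on_rect_sub (g : C -> C) a b c d a' b' c' d' :
  (forall z, inrect a' b' c' d' z -> inrect a b c d z) ->
  holo_on_rect g a b c d -> holo_on_rect g a' b' c' d'.
Proof. intros Hs H z Hz. apply H, Hs, Hz. Qed.

Lemma ccont_on_rect_of_holo (g : C -> C) a b c d :
  holo_on_rect g a b c d -> ccont_on_rect g a b c d.
Proof. intros H z Hz. apply ccont_of_holo_at, H, Hz. Qed.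

Lemma Irect_split_x (g : C -> C) a b c d m : ccont_on_rect g a b c d ->
  Rmin a b <= m <= Rmax a b -> Irect g a b c d = (Irect g a m c d + Irect g m b c d)%C.
Proof.
  intros H Hm. unfold Irect.
  assert (E : forall y a' b', Rmin c d <= y <= Rmax c d ->
      (forall x, Rmin a' b' <= x <= Rmax a' b' -> Rmin a b <= x <= Rmax a b) ->
      CexRInt (fun x => g (x, y)) a' b').
  { intros y a' b' Hy Hab. apply ex_RInt_hedge. intros x Hx. apply H. split; simpl; auto. }
  rewrite <- (CRInt_Chasles (fun x => g (x, c)) a m b), <- (CRInt_Chasles (fun x => g (x, d)) a m b);
    [ring | apply E; minmax_lra ..].
Qed.

Lemma Irect_split_y (g : C -> C) a b c d m : ccont_on_rect g a b c d ->
  Rmin c d <= m <= Rmax c d -> Irect g a b c d = (Irect g a b c m + Irect g a b m d)%C.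
Proof.
  intros H Hm. unfold Irect.
  assert (E : forall x c' d', Rmin a b <= x <= Rmax a b ->
      (forall y, Rmin c' d' <= y <= Rmax c' d' -> Rmin c d <= y <= Rmax c d) ->
      CexRInt (fun y => g (x, y)) c' d').
  { intros x c' d' Hx Hcd. apply ex_RInt_vedge. intros y Hy. apply H. split; simpl; auto. }
  rewrite <- (CRInt_Chasles (fun y => g (b, y)) c m d), <- (CRInt_Chasles (fun y => g (a, y)) c m d);
    [ring | apply E; minmax_lra ..].
Qed.

Lemma Irect_swap_x (g : C -> C) a b c d : ccont_on_rect g a b c d ->
  Irect g b a c d = (- Irect g a b c d)%C.
Proof.
  intros H. destruct (ex_RInt_rect_edges g a b c d H) as [Hc [Hd _]].
  unfold Irect. rewrite (CRInt_swap _ a b Hc), (CRInt_swap _ a b Hd). ring.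
Qed.

Lemma Irect_swap_y (g : C -> C) a b c d : ccont_on_rect g a b c d ->
  Irect g a b d c = (- Irect g a b c d)%C.
Proof.
  intros H. destruct (ex_RInt_rect_edges g a b c d H) as [_ [_ [Ha Hb]]].
  unfold Irect. rewrite (CRInt_swap _ c d Ha), (CRInt_swap _ c d Hb). ring.
Qed.

Lemma Irect_degen_x (g : C -> C) a c d : Irect g a a c d = RtoC 0.
Proof. unfold Irect. rewrite !CRInt_point. ring. Qed.

Lemma Irect_degen_y (g : C -> C) a b c : Irect g a b c c = RtoC 0.
Proof. unfold Irect. rewrite !CRInt_point. ring. Qed.

Lemma Irect_minus (g h : C -> C) a b c d : ccont_on_rect g a b c d -> ccont_on_rect h a b c d ->
  Irect (fun z => (g z - h z)%C) a b c d = (Irect g a b c d - Irect h a b c d)%C.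
Proof.
  intros Hg Hh. unfold Irect.
  destruct (ex_RInt_rect_edges g a b c d Hg) as [G1 [G2 [G3 G4]]].
  destruct (ex_RInt_rect_edges h a b c d Hh) as [H1 [H2 [H3 H4]]].
  rewrite !CRInt_minus by assumption. ring.
Qed.

Lemma Irect_bound (g : C -> C) a b c d M : ccont_on_rect g a b c d ->
  (forall z, inrect a b c d z -> Cmod (g z) <= M) ->
  Cmod (Irect g a b c d) <= 2 * (Rabs (b - a) + Rabs (d - c)) * M.
Proof.
  intros Hok HM. destruct (ex_RInt_rect_edges g a b c d Hok) as [G1 [G2 [G3 G4]]].
  assert (E1 := Cmod_CRInt_le_const _ a b M G1 ltac:(intros; apply HM; minmax_lra)).
  assert (E2 := Cmod_CRInt_le_const _ a b M G2 ltac:(intros; apply HM; minmax_lra)).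
  assert (E3 := Cmod_CRInt_le_const _ c d M G3 ltac:(intros; apply HM; minmax_lra)).
  assert (E4 := Cmod_CRInt_le_const _ c d M G4 ltac:(intros; apply HM; minmax_lra)).
  unfold Irect.
  set (A := CRInt (fun x => g (x, c)) a b) in *. set (B := CRInt (fun y => g (b, y)) c d) in *.
  set (C1 := CRInt (fun x => g (x, d)) a b) in *. set (D := CRInt (fun y => g (a, y)) c d) in *.
  replace (A + Ci * B - C1 - Ci * D)%C with (A + Ci * B + (- C1 + - (Ci * D)))%C by ring.
  eapply Rle_trans; [apply Cmod_triangle|].
  eapply Rle_trans; [apply Rplus_le_compat; apply Cmod_triangle|].
  rewrite !Cmod_opp, !Cmod_mult, Cmod_Ci. lra.
Qed.

Lemma Cmod_sub_inrect_le a b c d (z p : C) : inrect a b c d z -> inrect a b c d p ->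
  Cmod (z - p) <= Rabs (b - a) + Rabs (d - c).
Proof.
  destruct z as [x y], p as [x0 y0]. intros Hz Hp.
  replace ((x, y) - (x0, y0))%C with (((x - x0)%R, (y - y0)%R) : C)
    by (apply injective_projections; simpl; ring).
  eapply Rle_trans; [apply Cmod_pair_le|].
  apply Rplus_le_compat; unfold Rabs; repeat destruct Rcase_abs; minmax_lra.
Qed.

Lemma Irect_deriv_eq0 (G g : C -> C) a b c d :
  (forall z, inrect a b c d z -> cdiff G z (g z)) -> ccont_on_rect g a b c d ->
  Irect g a b c d = RtoC 0.
Proof.
  intros HG Hg.
  assert (Hedge : forall x y, inrect a b c d (x, y) ->
      cdiff G (x, y) (g (x, y)) /\ ccont g (x, y)) by (split; auto).
  assert (H : forall y, Rmin c d <= y <= Rmax c d ->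
      CRInt (fun x => g (x, y)) a b = (G (b, y) - G (a, y))%C).
  { intros y Hy. rewrite <- (CRInt_comp_deriv G g (fun x => (x, y)) (fun _ => RtoC 1)).
    - apply CRInt_ext. intros. ring.
    - intros t Ht. destruct (Hedge t y ltac:(minmax_lra)) as [HGt Hgt]. repeat split.
      + apply rdiff_line. intros s. apply injective_projections; simpl; ring.
      + exact HGt.
      + apply cont_at_mult; [|apply cont_at_const].
        apply (cont_at_comp _ _ g (fun x => (x, y))); [apply rcont_hpath | exact Hgt]. }
  assert (V : forall x, Rmin a b <= x <= Rmax a b ->
      (Ci * CRInt (fun y => g (x, y)) c d)%C = (G (x, d) - G (x, c))%C).
  { intros x Hx. rewrite <- (CRInt_comp_deriv G g (fun y => (x, y)) (fun _ => Ci)).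
    - rewrite <- CRInt_Cmult by (apply ex_RInt_vedge; intros; apply Hg; minmax_lra).
      apply CRInt_ext. intros. ring.
    - intros t Ht. destruct (Hedge x t ltac:(minmax_lra)) as [HGt Hgt]. repeat split.
      + apply rdiff_line. intros s. apply injective_projections; simpl; ring.
      + exact HGt.
      + apply cont_at_mult; [|apply cont_at_const].
        apply (cont_at_comp _ _ g (fun y => (x, y))); [apply rcont_vpath | exact Hgt]. }
  unfold Irect. rewrite (H c), (H d), (V a), (V b) by minmax_lra. ring.
Qed.

Lemma cdiff_quadratic (al be z : C) :
  cdiff (fun w => (al * w + RtoC (/ 2) * be * w * w)%C) z (al + be * z)%C.
Proof.
  intros eps Heps. set (k := Cmod be + 1). assert (Hk : 0 < k) by (unfold k; pose proof (Cmod_ge_0 be); lra).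
  exists (eps / k). split; [apply Rdiv_lt_0_compat; lra|]. intros w Hw.
  replace (al * w + RtoC (/ 2) * be * w * w - (al * z + RtoC (/ 2) * be * z * z)
           - (w - z) * (al + be * z))%C
    with (RtoC (/ 2) * be * (w - z) * (w - z))%C
    by (apply injective_projections; simpl; field).
  rewrite !Cmod_mult, Cmod_R, Rabs_right by lra.
  pose proof (Cmod_ge_0 (w - z)). pose proof (Cmod_ge_0 be).
  assert (Cmod (w - z) * k < eps).
  { apply Rmult_lt_reg_r with (/ k); [apply Rinv_0_lt_compat; lra|].
    rewrite Rmult_assoc, Rinv_r, Rmult_1_r by lra. exact Hw. }
  unfold k in *. nra.
Qed.

Lemma Irect_affine (al be : C) a b c d : Irect (fun z => (al + be * z)%C) a b c d = RtoC 0.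
Proof.
  apply (Irect_deriv_eq0 (fun w => (al * w + RtoC (/ 2) * be * w * w)%C)).
  - intros z _. apply cdiff_quadratic.
  - intros z _. apply ccont_affine.
Qed.

(** * Goursat's theorem *)

Lemma nested_intervals (a b : nat -> R) :
  (forall n, a n <= a (S n) /\ a (S n) <= b (S n) /\ b (S n) <= b n) ->
  a 0%nat <= b 0%nat -> exists x, forall n, a n <= x <= b n.
Proof.
  intros H H0.
  assert (Mono : forall n k, a n <= a (n + k)%nat /\ b (n + k)%nat <= b n).
  { intros n k. induction k as [|k IH]; rewrite ?Nat.add_0_r, ?Nat.add_succ_r; [lra|].
    specialize (H (n + k)%nat). lra. }
  assert (Hab : forall n, a n <= b n) by (intros [|n]; [exact H0 | apply H]).
  assert (Cross : forall m n, a m <= b n).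
  { intros m n. destruct (Nat.le_ge_cases m n) as [Hmn|Hmn].
    - destruct (Mono m (n - m)%nat) as [M _]. replace (m + (n - m))%nat with n in M by lia.
      specialize (Hab n). lra.
    - destruct (Mono n (m - n)%nat) as [_ M]. replace (n + (m - n))%nat with m in M by lia.
      specialize (Hab m). lra. }
  destruct (completeness (fun x => exists n, x = a n)) as [x [Ux Lx]].
  - exists (b 0%nat). intros x [n ->]. apply Cross.
  - exists (a 0%nat), 0%nat. reflexivity.
  - exists x. intros n. split.
    + apply Ux. exists n. reflexivity.
    + apply Lx. intros y [m ->]. apply Cross.
Qed.

Lemma le_eps_mult_eq0 (x K : R) : 0 <= x -> (forall eps, 0 < eps -> x <= eps * K) -> x = 0.
Proof.
  intros Hx H. assert (HK : 0 <= K) by (specialize (H 1 Rlt_0_1); lra).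
  apply Rle_antisym; [|exact Hx]. apply Rle_plus_epsilon. intros eps Heps.
  specialize (H (eps / (K + 1)) ltac:(apply Rdiv_lt_0_compat; lra)).
  assert (Hq : K / (K + 1) <= 1).
  { apply Rmult_le_reg_r with (K + 1); [lra|].
    unfold Rdiv. rewrite Rmult_assoc, Rinv_l by lra. lra. }
  replace (eps / (K + 1) * K) with (eps * (K / (K + 1))) in H by (field; lra).
  nra.
Qed.

Lemma pow_small_eventually (rho K delta : R) : 0 <= rho < 1 -> 0 <= K -> 0 < delta ->
  exists N, K * rho ^ N < delta.
Proof.
  intros Hrho HK Hdelta.
  destruct (pow_lt_1_zero rho ltac:(rewrite Rabs_right; lra) (delta / (K + 1))) as [N HN];
    [apply Rdiv_lt_0_compat; lra|].
  exists N. specialize (HN N (le_n N)). rewrite Rabs_right in HN by (apply Rle_ge, pow_le; lra).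
  assert (0 <= rho ^ N) by (apply pow_le; lra).
  apply Rle_lt_trans with ((K + 1) * rho ^ N); [nra|].
  replace delta with ((K + 1) * (delta / (K + 1))) by (field; lra).
  apply Rmult_lt_compat_l; lra.
Qed.

Record rect := mkRect { ra : R; rb : R; rc : R; rd : R }.

Definition Irect_of (g : C -> C) (r : rect) : C := Irect g (ra r) (rb r) (rc r) (rd r).

Definition rect_size (r : rect) : R := (rb r - ra r) + (rd r - rc r).

Definition rect_in (r' r : rect) : Prop :=
  ra r <= ra r' /\ ra r' <= rb r' /\ rb r' <= rb r /\
  rc r <= rc r' /\ rc r' <= rd r' /\ rd r' <= rd r.

Definition quarter_of (g : C -> C) (r r' : rect) : Prop :=
  rect_in r' r /\ rect_size r' = rect_size r / 2 /\ Cmod (Irect_of g r) <= 4 * Cmod (Irect_of g r').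

Lemma rect_in_inrect (r' r : rect) (z : C) : rect_in r' r ->
  inrect (ra r') (rb r') (rc r') (rd r') z -> inrect (ra r) (rb r) (rc r) (rd r) z.
Proof. unfold rect_in. intros Hin Hz. minmax_lra. Qed.

(* The boundary integrals of the four quarters add up to that of [r]. *)
Lemma quarter_exists (g : C -> C) (r : rect) : ra r <= rb r -> rc r <= rd r ->
  holo_on_rect g (ra r) (rb r) (rc r) (rd r) -> exists r', quarter_of g r r'.
Proof.
  destruct r as [a b c d]; unfold quarter_of, rect_in, rect_size, Irect_of; simpl.
  intros Hab Hcd H. apply ccont_on_rect_of_holo in H.
  set (m := (a + b) / 2). set (n := (c + d) / 2).
  assert (E : Irect g a b c d =
     (Irect g a m c n + Irect g a m n d + (Irect g m b c n + Irect g m b n d))%C).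
  { assert (Sub : forall a' b', a <= a' <= b' -> b' <= b -> ccont_on_rect g a' b' c d)
      by (intros; eapply ccont_on_rect_sub; [|exact H]; minmax_lra).
    rewrite (Irect_split_x g a b c d m), (Irect_split_y g a m c d n), (Irect_split_y g m b c d n);
      [reflexivity | ..].
    all: try apply Sub.
    all: unfold m, n; minmax_lra. }
  assert (T : Cmod (Irect g a b c d) <=
     Cmod (Irect g a m c n) + Cmod (Irect g a m n d) + (Cmod (Irect g m b c n) + Cmod (Irect g m b n d))).
  { rewrite E. eapply Rle_trans; [apply Cmod_triangle|].
    apply Rplus_le_compat; apply Cmod_triangle. }
  destruct (Rle_lt_dec (Cmod (Irect g a b c d)) (4 * Cmod (Irect g a m c n))).
  { exists (mkRect a m c n). simpl. unfold m, n in *. repeat split; lra. }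
  destruct (Rle_lt_dec (Cmod (Irect g a b c d)) (4 * Cmod (Irect g a m n d))).
  { exists (mkRect a m n d). simpl. unfold m, n in *. repeat split; lra. }
  destruct (Rle_lt_dec (Cmod (Irect g a b c d)) (4 * Cmod (Irect g m b c n))).
  { exists (mkRect m b c n). simpl. unfold m, n in *. repeat split; lra. }
  exists (mkRect m b n d). simpl. unfold m, n in *. repeat split; lra.
Qed.

(* Near a point of differentiability, [g] differs from an affine function, whose
   boundary integrals vanish, by [eps |z - z0|]. *)
Lemma Irect_local_bound (g : C -> C) (z0 l : C) : cdiff g z0 l ->
  forall eps, 0 < eps -> exists delta, 0 < delta /\ forall r : rect,
    ra r <= rb r -> rc r <= rd r -> inrect (ra r) (rb r) (rc r) (rd r) z0 ->
    rect_size r < delta -> ccont_on_rect g (ra r) (rb r) (rc r) (rd r) ->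
    Cmod (Irect_of g r) <= eps * (2 * rect_size r ^ 2).
Proof.
  intros Hl eps Heps. destruct (Hl eps Heps) as [delta [Hdelta Hd]].
  exists delta. split; [exact Hdelta|]. intros [a b c d]; unfold Irect_of, rect_size; simpl.
  intros Hab Hcd Hz0 Hsize Hg.
  set (E := fun z => (g z - ((g z0 - z0 * l) + l * z))%C).
  assert (Haff : ccont_on_rect (fun z => ((g z0 - z0 * l) + l * z)%C) a b c d)
    by (intros z _; apply ccont_affine).
  replace (Irect g a b c d) with (Irect E a b c d)
    by (unfold E; rewrite Irect_minus, Irect_affine by assumption; ring).
  eapply Rle_trans.
  - apply (Irect_bound E a b c d (eps * ((b - a) + (d - c)))).
    + intros z Hz. apply cont_at_minus; [apply Hg, Hz | apply ccont_affine].
    + intros z Hz. assert (Dz := Cmod_sub_inrect_le _ _ _ _ z z0 Hz Hz0).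
      rewrite !Rabs_right in Dz by lra.
      unfold E. replace (g z - (g z0 - z0 * l + l * z))%C with (g z - g z0 - (z - z0) * l)%C by ring.
      eapply Rle_trans; [apply Hd; lra | apply Rmult_le_compat_l; lra].
  - rewrite !Rabs_right by lra. right. ring.
Qed.

(* An arbitrary rectangle if no quarter qualifies, which [quarter_exists] rules out
   on holomorphic rectangles. *)
Definition quarter_step (g : C -> C) (r : rect) : rect :=
  epsilon (inhabits r) (fun r' => quarter_of g r r').

Fixpoint quarter_seq (g : C -> C) (r0 : rect) (n : nat) : rect :=
  match n with O => r0 | S n => quarter_step g (quarter_seq g r0 n) end.

Section QuarterSeq.

Variables (g : C -> C) (r0 : rect).
Hypotheses (Hab : ra r0 <= rb r0) (Hcd : rc r0 <= rd r0)
  (Hg : holo_on_rect g (ra r0) (rb r0) (rc r0) (rd r0)).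

Lemma quarter_seq_spec (n : nat) :
  rect_in (quarter_seq g r0 n) r0 /\ quarter_of g (quarter_seq g r0 n) (quarter_seq g r0 (S n)).
Proof.
  assert (Step : forall r, rect_in r r0 -> quarter_of g r (quarter_step g r)).
  { intros r Hr. unfold quarter_step. apply epsilon_spec, quarter_exists; try (unfold rect_in in Hr; lra).
    eapply holo_on_rect_sub; [|exact Hg]. intros z. apply rect_in_inrect, Hr. }
  induction n as [|n [IH _]].
  - simpl. split; [unfold rect_in; lra | apply Step; unfold rect_in; lra].
  - assert (Hin : rect_in (quarter_seq g r0 (S n)) r0).
    { destruct (Step _ IH) as [Hq _]. unfold rect_in in *. simpl. lra. }
    split; [exact Hin | apply Step, Hin].
Qed.

Lemma quarter_seq_size (n : nat) : rect_size (quarter_seq g r0 n) = rect_size r0 * (/ 2) ^ n.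
Proof.
  induction n as [|n IH]; simpl; [ring|].
  destruct (quarter_seq_spec n) as [_ [_ [Hs _]]]. simpl in Hs. rewrite Hs, IH. field.
Qed.

Lemma quarter_seq_Irect (n : nat) :
  Cmod (Irect_of g r0) <= 4 ^ n * Cmod (Irect_of g (quarter_seq g r0 n)).
Proof.
  induction n as [|n IH]; [simpl; lra|].
  destruct (quarter_seq_spec n) as [_ [_ [_ Hq]]].
  assert (0 <= 4 ^ n) by (apply pow_le; lra). simpl pow. nra.
Qed.

Lemma quarter_seq_point : exists z0, forall n,
  inrect (ra (quarter_seq g r0 n)) (rb (quarter_seq g r0 n))
         (rc (quarter_seq g r0 n)) (rd (quarter_seq g r0 n)) z0.
Proof.
  set (sq := quarter_seq g r0).
  assert (Nest : forall n, rect_in (sq (S n)) (sq n)) by (intros n; apply quarter_seq_spec).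
  destruct (nested_intervals (fun n => ra (sq n)) (fun n => rb (sq n))) as [x Hx];
    [intros n; specialize (Nest n); unfold rect_in in Nest; cbv beta; lra | unfold sq; simpl; lra |].
  destruct (nested_intervals (fun n => rc (sq n)) (fun n => rd (sq n))) as [y Hy];
    [intros n; specialize (Nest n); unfold rect_in in Nest; cbv beta; lra | unfold sq; simpl; lra |].
  exists (x, y). intros n. specialize (Hx n). specialize (Hy n). minmax_lra.
Qed.

Lemma quarter_seq_Irect_eq0 : Irect_of g r0 = RtoC 0.
Proof.
  destruct quarter_seq_point as [z0 Hz0].
  destruct (holo_at_cdiff g z0 (Hg z0 (Hz0 0%nat))) as [l Hl].
  assert (Hs0 : 0 <= rect_size r0) by (unfold rect_size; lra).
  apply Cmod_eq_0, (le_eps_mult_eq0 _ (2 * rect_size r0 ^ 2)); [apply Cmod_ge_0|].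
  intros eps Heps. destruct (Irect_local_bound g z0 l Hl eps Heps) as [delta [Hdelta Hloc]].
  destruct (pow_small_eventually (/ 2) (rect_size r0) delta) as [N HN]; [lra | lra | exact Hdelta |].
  set (rN := quarter_seq g r0 N).
  destruct (quarter_seq_spec N) as [HN0 _]. fold rN in HN0.
  assert (Loc : Cmod (Irect_of g rN) <= eps * (2 * rect_size rN ^ 2)).
  { unfold rect_in in HN0. apply Hloc; [lra | lra | apply Hz0 | |].
    - unfold rN. rewrite quarter_seq_size. exact HN.
    - apply ccont_on_rect_of_holo. eapply holo_on_rect_sub; [|exact Hg].
      intros z. apply rect_in_inrect. unfold rect_in; lra. }
  eapply Rle_trans; [apply (quarter_seq_Irect N)|].
  eapply Rle_trans; [apply Rmult_le_compat_l; [apply pow_le; lra | exact Loc]|].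
  unfold rN. rewrite quarter_seq_size.
  replace (4 ^ N * (eps * (2 * (rect_size r0 * (/ 2) ^ N) ^ 2)))
    with (eps * (2 * rect_size r0 ^ 2) * (4 * (/ 2) ^ 2) ^ N)
    by (rewrite !Rpow_mult_distr, <- !pow_mult, Nat.mul_comm; ring).
  replace (4 * (/ 2) ^ 2) with 1 by field. rewrite pow1. lra.
Qed.

End QuarterSeq.

Lemma Irect_holo_eq0_ordered (g : C -> C) a b c d : a <= b -> c <= d ->
  holo_on_rect g a b c d -> Irect g a b c d = RtoC 0.
Proof. apply (quarter_seq_Irect_eq0 g (mkRect a b c d)). Qed.

Lemma inrect_swap_x a b c d z : inrect a b c d z <-> inrect b a c d z.
Proof. unfold inrect. rewrite Rmin_comm, Rmax_comm. tauto. Qed.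

Lemma inrect_swap_y a b c d z : inrect a b c d z <-> inrect a b d c z.
Proof. unfold inrect. rewrite (Rmin_comm c), (Rmax_comm c). tauto. Qed.

Lemma Copp_eq0 (x : C) : (- x)%C = RtoC 0 -> x = RtoC 0.
Proof. intros H. replace x with (- - x)%C by ring. rewrite H. ring. Qed.

Lemma Irect_holo_eq0 (g : C -> C) a b c d : holo_on_rect g a b c d -> Irect g a b c d = RtoC 0.
Proof.
  intros H.
  assert (Hx : forall a b c d, holo_on_rect g a b c d -> holo_on_rect g b a c d)
    by (intros ? ? ? ? Hr z Hz; apply Hr, inrect_swap_x, Hz).
  assert (Hy : forall a b c d, holo_on_rect g a b c d -> holo_on_rect g a b d c)
    by (intros ? ? ? ? Hr z Hz; apply Hr, inrect_swap_y, Hz).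
  destruct (Rle_lt_dec a b) as [Hab|Hab]; destruct (Rle_lt_dec c d) as [Hcd|Hcd].
  - apply Irect_holo_eq0_ordered; auto.
  - apply Copp_eq0. rewrite <- Irect_swap_y by (apply ccont_on_rect_of_holo; auto).
    apply Irect_holo_eq0_ordered; auto; lra.
  - apply Copp_eq0. rewrite <- Irect_swap_x by (apply ccont_on_rect_of_holo; auto).
    apply Irect_holo_eq0_ordered; auto; lra.
  - apply Copp_eq0. rewrite <- Irect_swap_x by (apply ccont_on_rect_of_holo; auto).
    apply Copp_eq0. rewrite <- Irect_swap_y by (apply ccont_on_rect_of_holo; auto).
    apply Irect_holo_eq0_ordered; auto; lra.
Qed.

Lemma Rabs_between a a' x : Rmin a a' <= x <= Rmax a a' -> Rabs (x - a) <= Rabs (a' - a).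
Proof. intros H. unfold Rmin, Rmax, Rabs in *. repeat destruct Rle_dec; repeat destruct Rcase_abs; lra. Qed.

(* Away from the corner the boundary integral vanishes, so it equals the integral
   over an arbitrarily small rectangle at the corner. *)
Lemma Irect_corner_shrink (g : C -> C) a b c d t : a <> b -> c <> d -> 0 < t <= 1 ->
  ccont_on_rect g a b c d ->
  (forall z, inrect a b c d z -> z <> (a, c) -> holo_at g z) ->
  Irect g a b c d = Irect g a (a + t * (b - a)) c (c + t * (d - c)).
Proof.
  intros Hab Hcd Ht Hg Hh. set (a' := a + t * (b - a)). set (c' := c + t * (d - c)).
  assert (Ha' : (a < a' <= b) \/ (b <= a' < a))
    by (unfold a'; destruct (Rlt_le_dec a b); [left | right]; split; nra).
  assert (Hc' : (c < c' <= d) \/ (d <= c' < c))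
    by (unfold c'; destruct (Rlt_le_dec c d); [left | right]; split; nra).
  clearbody a' c'.
  assert (Z : forall p q r s, (forall z, inrect p q r s z -> inrect a b c d z /\ z <> (a, c)) ->
      Irect g p q r s = RtoC 0).
  { intros p q r s Hs. apply Irect_holo_eq0. intros z Hz. apply Hh; apply Hs, Hz. }
  rewrite (Irect_split_x g a b c d a'), (Irect_split_y g a a' c d c'), (Irect_split_y g a' b c d c');
    [| eapply ccont_on_rect_sub; [|exact Hg]; destruct Ha', Hc'; minmax_lra
     | destruct Hc'; minmax_lra
     | eapply ccont_on_rect_sub; [|exact Hg]; destruct Ha', Hc'; minmax_lra
     | destruct Hc'; minmax_lra
     | exact Hg
     | destruct Ha'; minmax_lra].
  rewrite (Z a a' c' d), (Z a' b c c'), (Z a' b c' d); [ring | ..];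
    intros [x y] Hz; (split; [destruct Ha', Hc'; minmax_lra|]);
    intros E; injection E as -> ->; destruct Ha', Hc'; minmax_lra.
Qed.

Lemma Irect_bound_near (g : C -> C) (p : C) a b c d M del : ccont_on_rect g a b c d ->
  inrect a b c d p -> Rabs (b - a) + Rabs (d - c) < del ->
  (forall z, Cmod (z - p) < del -> Cmod (g z) <= M) ->
  Cmod (Irect g a b c d) <= 2 * (Rabs (b - a) + Rabs (d - c)) * M.
Proof.
  intros Hg Hp Hsize HM. apply Irect_bound; [exact Hg|].
  intros z Hz. apply HM. eapply Rle_lt_trans; [apply (Cmod_sub_inrect_le _ _ _ _ z p Hz Hp) | exact Hsize].
Qed.

Lemma Irect_corner_eq0 (g : C -> C) a b c d : ccont_on_rect g a b c d ->
  (forall z, inrect a b c d z -> z <> (a, c) -> holo_at g z) ->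
  Irect g a b c d = RtoC 0.
Proof.
  intros Hg Hh.
  destruct (Req_dec a b) as [<-|Hab]; [apply Irect_degen_x|].
  destruct (Req_dec c d) as [<-|Hcd]; [apply Irect_degen_y|].
  set (p := (a, c) : C). assert (Hp : inrect a b c d p) by (unfold p; minmax_lra).
  destruct (Hg p Hp 1 Rlt_0_1) as [del [Hdel Hnear]].
  set (M := Cmod (g p) + 1). assert (HM : 0 < M) by (unfold M; pose proof (Cmod_ge_0 (g p)); lra).
  assert (Bound : forall z, Cmod (z - p) < del -> Cmod (g z) <= M).
  { intros z Hz. specialize (Hnear z Hz). unfold M.
    replace (g z) with (g p + (g z - g p))%C by ring. eapply Rle_trans; [apply Cmod_triangle | lra]. }
  set (L := Rabs (b - a) + Rabs (d - c)).
  assert (HL : 0 < L) by (unfold L; pose proof (Rabs_pos_lt (b - a)); pose proof (Rabs_pos (d - c)); lra).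
  apply Cmod_eq_0, (le_eps_mult_eq0 _ (2 * L * M)); [apply Cmod_ge_0|]. intros eps Heps.
  set (t := Rmin eps (Rmin 1 (del / (2 * L)))).
  assert (Ht0 : 0 < t) by (apply Rmin_pos; [lra | apply Rmin_pos; [lra | apply Rdiv_lt_0_compat; lra]]).
  assert (Ht1 : t <= 1) by (eapply Rle_trans; [apply Rmin_r | apply Rmin_l]).
  assert (Hte : t <= eps) by apply Rmin_l.
  assert (HtL : t * L < del).
  { assert (t <= del / (2 * L)) by (eapply Rle_trans; apply Rmin_r).
    apply Rle_lt_trans with (del / (2 * L) * L); [apply Rmult_le_compat_r; lra|].
    replace (del / (2 * L) * L) with (del / 2) by (field; lra). lra. }
  rewrite (Irect_corner_shrink g a b c d t) by (auto; lra).
  set (a' := a + t * (b - a)). set (c' := c + t * (d - c)).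
  assert (Hsz : Rabs (a' - a) + Rabs (c' - c) = t * L).
  { unfold a', c', L. rewrite !Rplus_minus_l, !Rabs_mult, Rabs_right by lra. ring. }
  assert (Ha' : (a <= a' <= b) \/ (b <= a' <= a))
    by (unfold a'; destruct (Rlt_le_dec a b); [left | right]; split; nra).
  assert (Hc' : (c <= c' <= d) \/ (d <= c' <= c))
    by (unfold c'; destruct (Rlt_le_dec c d); [left | right]; split; nra).
  eapply Rle_trans; [apply (Irect_bound_near g p a a' c c' M del) |].
  - eapply ccont_on_rect_sub; [|exact Hg]. destruct Ha', Hc'; minmax_lra.
  - unfold p. destruct Ha', Hc'; minmax_lra.
  - rewrite Hsz. exact HtL.
  - exact Bound.
  - rewrite Hsz. replace (2 * (t * L) * M) with (t * (2 * L * M)) by ring.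
    apply Rmult_le_compat_r; [nra | exact Hte].
Qed.

Lemma Irect_except_eq0 (g : C -> C) a b c d (p : C) : ccont_on_rect g a b c d ->
  (forall z, inrect a b c d z -> z <> p -> holo_at g z) ->
  Irect g a b c d = RtoC 0.
Proof.
  intros Hg Hh. destruct (classic (inrect a b c d p)) as [Hp|Hp].
  2: { apply Irect_holo_eq0. intros z Hz. apply Hh; [exact Hz | intros ->; contradiction]. }
  destruct p as [p1 p2].
  assert (Corner : forall b' d', (forall z, inrect p1 b' p2 d' z -> inrect a b c d z) ->
      Irect g p1 b' p2 d' = RtoC 0).
  { intros b' d' Hs. apply Irect_corner_eq0; [eapply ccont_on_rect_sub; eauto|].
    intros z Hz Hzp. apply Hh; auto. }
  assert (Hsub : forall z, inrect a p1 c d z \/ inrect p1 b c d z -> inrect a b c d z)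
    by (intros z [Hz|Hz]; minmax_lra).
  rewrite (Irect_split_x g a b c d p1), (Irect_split_y g a p1 c d p2), (Irect_split_y g p1 b c d p2);
    [| eapply ccont_on_rect_sub; [|exact Hg]; minmax_lra | minmax_lra
     | eapply ccont_on_rect_sub; [|exact Hg]; minmax_lra | minmax_lra | exact Hg | minmax_lra].
  rewrite (Irect_swap_x g p1 a c p2), (Irect_swap_y g p1 a p2 c), (Irect_swap_x g p1 a p2 d),
    (Irect_swap_y g p1 b p2 c), !Corner; try ring;
    try (eapply ccont_on_rect_sub; [|exact Hg]); minmax_lra.
Qed.

(** * Primitives on the disk and integrals over circles *)

Lemma Cmod_mono (x y x' y' : R) : Rabs x <= Rabs x' -> Rabs y <= Rabs y' -> Cmod (x, y) <= Cmod (x', y').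
Proof.
  intros Hx Hy. unfold Cmod; simpl. apply sqrt_le_1_alt. rewrite !Rmult_1_r.
  apply Rsqr_le_abs_1 in Hx, Hy. unfold Rsqr in *. lra.
Qed.

Lemma Cmod_shift (x y t s : R) : Cmod (t, s) <= Cmod (x, y) + Rabs (t - x) + Rabs (s - y).
Proof.
  replace ((t, s) : C) with ((x, y) + ((t - x)%R, (s - y)%R))%C
    by (apply injective_projections; simpl; ring).
  eapply Rle_trans; [apply Cmod_triangle|]. pose proof (Cmod_pair_le (t - x) (s - y)). lra.
Qed.

Lemma derivable_pt_lim_eps (f : R -> R) t l : derivable_pt_lim f t l ->
  forall eps, 0 < eps -> exists delta, 0 < delta /\ forall s, Rabs (s - t) < delta ->
    Rabs (f s - f t - (s - t) * l) <= eps * Rabs (s - t).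
Proof.
  intros H eps Heps. destruct (H eps Heps) as [d Hd]. exists d. split; [apply cond_pos|].
  intros s Hs. destruct (Req_dec s t) as [->|E].
  { rewrite !Rminus_diag, Rmult_0_l, Rminus_0_r, Rabs_R0. lra. }
  specialize (Hd (s - t) ltac:(lra) Hs). replace (t + (s - t)) with s in Hd by ring.
  replace (f s - f t - (s - t) * l) with ((s - t) * ((f s - f t) / (s - t) - l)) by (field; lra).
  rewrite Rabs_mult, Rmult_comm. apply Rmult_le_compat_r; [apply Rabs_pos | lra].
Qed.

Lemma rdiff_pair (u w : R -> R) t lu lw : derivable_pt_lim u t lu -> derivable_pt_lim w t lw ->
  rdiff (fun s => (u s, w s)) t (lu, lw).
Proof.
  intros Hu Hw eps Heps.
  destruct (derivable_pt_lim_eps u t lu Hu (eps / 2)) as [d1 [Hd1 K1]]; [lra|].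
  destruct (derivable_pt_lim_eps w t lw Hw (eps / 2)) as [d2 [Hd2 K2]]; [lra|].
  exists (Rmin d1 d2). split; [apply Rmin_pos; auto|]. intros s Hs.
  assert (A := K1 s (Rlt_le_trans _ _ _ Hs (Rmin_l _ _))).
  assert (B := K2 s (Rlt_le_trans _ _ _ Hs (Rmin_r _ _))).
  replace ((u s, w s) - (u t, w t) - RtoC (s - t) * (lu, lw))%C
    with (((u s - u t - (s - t) * lu)%R, (w s - w t - (s - t) * lw)%R) : C)
    by (apply injective_projections; simpl; ring).
  eapply Rle_trans; [apply Cmod_pair_le | lra].
Qed.

Definition circ (r t : R) : C := ((r * cos t)%R, (r * sin t)%R).

Lemma Cmod_circ (r t : R) : Cmod (circ r t) = Rabs r.
Proof.
  unfold circ, Cmod; simpl. rewrite <- sqrt_Rsqr_abs. f_equal.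
  replace (r * cos t * (r * cos t * 1) + r * sin t * (r * sin t * 1))
    with (r² * ((sin t)² + (cos t)²)) by (unfold Rsqr; ring).
  rewrite sin2_cos2. ring.
Qed.

Lemma in_disk_circ (r t : R) : 0 <= r < 1 -> in_disk (circ r t).
Proof. intros Hr. unfold in_disk. rewrite Cmod_circ, Rabs_right; lra. Qed.

Lemma rcont_circ (r t : R) : rcont (circ r) t.
Proof. apply rcont_pair; apply continuity_pt_scal; [apply continuity_cos | apply continuity_sin]. Qed.

Lemma rdiff_circ (r t : R) : rdiff (circ r) t (Ci * circ r t)%C.
Proof.
  replace (Ci * circ r t)%C with (((- r * sin t)%R, (r * cos t)%R) : C)
    by (unfold circ, Ci; apply injective_projections; simpl; ring).
  apply (rdiff_pair (fun s => r * cos s) (fun s => r * sin s)).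
  - replace (- r * sin t) with (r * - sin t) by ring.
    apply derivable_pt_lim_scal, derivable_pt_lim_cos.
  - apply derivable_pt_lim_scal, derivable_pt_lim_sin.
Qed.

Definition prim (g : C -> C) (z : C) : C :=
  (CRInt (fun t => g (t, 0)) 0 (fst z) + Ci * CRInt (fun s => g (fst z, s)) 0 (snd z))%C.

Section Primitive.

Variable g : C -> C.
Hypothesis g_cont : forall w, in_disk w -> ccont g w.
Hypothesis g_rect : forall a b c d, (forall w, inrect a b c d w -> in_disk w) -> Irect g a b c d = RtoC 0.

Lemma in_disk_shift (x y t s : R) : Cmod (x, y) + Rabs (t - x) + Rabs (s - y) < 1 -> in_disk (t, s).
Proof. intros H. unfold in_disk. eapply Rle_lt_trans; [apply Cmod_shift | exact H]. Qed.

Lemma ex_RInt_prim_edges (x y u v : R) : Cmod (x, y) + Rabs u + Rabs v < 1 ->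
  CexRInt (fun t => g (t, y)) x (x + u) /\ CexRInt (fun s => g ((x + u)%R, s)) y (y + v).
Proof.
  intros Hsmall. split; [apply ex_RInt_hedge | apply ex_RInt_vedge]; intros t Ht;
    apply g_cont, (in_disk_shift x y); apply Rabs_between in Ht; rewrite ?Rminus_diag, ?Rabs_R0;
    rewrite Rplus_minus_l in *; pose proof (Rabs_pos u); pose proof (Rabs_pos v); lra.
Qed.

Lemma prim_increment (x y u v : R) : Cmod (x, y) + Rabs u + Rabs v < 1 ->
  (prim g ((x + u)%R, (y + v)%R) - prim g (x, y))%C =
  (CRInt (fun t => g (t, y)) x (x + u) + Ci * CRInt (fun s => g ((x + u)%R, s)) y (y + v))%C.
Proof.
  intros Hsmall. destruct (ex_RInt_prim_edges x y u v Hsmall) as [_ I4].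
  assert (Near : forall t s, Rabs (t - x) <= Rabs u -> Rabs s <= Rabs y -> in_disk (t, s)).
  { intros t s Ht Hs. unfold in_disk. apply Rle_lt_trans with (Cmod (t, y)); [apply Cmod_mono; lra|].
    apply (in_disk_shift x y). rewrite Rminus_diag, Rabs_R0. pose proof (Rabs_pos v). lra. }
  assert (Hhor : forall t, Rmin x (x + u) <= t <= Rmax x (x + u) -> Rabs (t - x) <= Rabs u)
    by (intros t Ht; apply Rabs_between in Ht; now rewrite Rplus_minus_l in Ht).
  assert (Hver : forall s, Rmin 0 y <= s <= Rmax 0 y -> Rabs s <= Rabs y)
    by (intros s Hs; apply Rabs_between in Hs; now rewrite !Rminus_0_r in Hs).
  assert (I1 : CexRInt (fun t => g (t, 0)) 0 x).
  { apply ex_RInt_hedge. intros t Ht. apply g_cont. unfold in_disk.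
    apply Rle_lt_trans with (Cmod (x, y)); [|pose proof (Rabs_pos u); pose proof (Rabs_pos v); lra].
    apply Rabs_between in Ht. rewrite !Rminus_0_r in Ht.
    apply Cmod_mono; [lra | rewrite Rabs_R0; apply Rabs_pos]. }
  assert (I2 : CexRInt (fun t => g (t, 0)) x (x + u)).
  { apply ex_RInt_hedge. intros t Ht. apply g_cont, Near; [auto | rewrite Rabs_R0; apply Rabs_pos]. }
  assert (I3 : CexRInt (fun s => g ((x + u)%R, s)) 0 y).
  { apply ex_RInt_vedge. intros s Hs. apply g_cont, Near; [rewrite Rplus_minus_l; lra | auto]. }
  assert (Zero : Irect g x (x + u) 0 y = RtoC 0)
    by (apply g_rect; intros [t s] [Ht Hs]; apply Near; auto).
  unfold prim, Irect in *; simpl.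
  rewrite <- (CRInt_Chasles (fun t => g (t, 0)) 0 x (x + u)) by assumption.
  rewrite <- (CRInt_Chasles (fun s => g ((x + u)%R, s)) 0 y (y + v)) by assumption.
  rewrite <- (Cplus_0_r (CRInt (fun t => g (t, y)) x (x + u))), <- Zero. ring.
Qed.

(* The increment is [\int g] along a horizontal then a vertical segment; each
   integrand stays within [eps/2] of [g z]. *)
Lemma prim_cdiff (z : C) : in_disk z -> cdiff (prim g) z (g z).
Proof.
  intros Hz eps Heps. destruct (g_cont z Hz (eps / 2)) as [d1 [Hd1 K1]]; [lra|].
  exists (Rmin (d1 / 2) ((1 - Cmod z) / 2)). unfold in_disk in Hz.
  split; [apply Rmin_pos; lra|]. intros w Hw. destruct z as [x y], w as [x' y'].
  set (u := x' - x). set (v := y' - y).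
  replace ((x', y') - (x, y))%C with ((u, v) : C) in Hw |- *
    by (apply injective_projections; simpl; unfold u, v; ring).
  replace x' with (x + u) by (unfold u; ring). replace y' with (y + v) by (unfold v; ring).
  clearbody u v.
  assert (Hu : Rabs u <= Cmod (u, v)) by (eapply Rle_trans; [apply Rmax_l | apply (Rmax_Cmod (u, v))]).
  assert (Hv : Rabs v <= Cmod (u, v)) by (eapply Rle_trans; [apply Rmax_r | apply (Rmax_Cmod (u, v))]).
  assert (Hw1 : Cmod (u, v) < d1 / 2) by (eapply Rlt_le_trans; [exact Hw | apply Rmin_l]).
  assert (Hw2 : Cmod (u, v) < (1 - Cmod (x, y)) / 2) by (eapply Rlt_le_trans; [exact Hw | apply Rmin_r]).
  rewrite prim_increment by lra.
  destruct (ex_RInt_prim_edges x y u v ltac:(lra)) as [Ih Iv].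
  assert (E1 := Cmod_CRInt_sub_const_le _ x (x + u) (g (x, y)) (eps / 2) Ih).
  assert (E2 := Cmod_CRInt_sub_const_le _ y (y + v) (g (x, y)) (eps / 2) Iv).
  rewrite Rplus_minus_l in E1, E2.
  replace (CRInt (fun t => g (t, y)) x (x + u) + Ci * CRInt (fun s => g ((x + u)%R, s)) y (y + v)
           - (u, v) * g (x, y))%C
    with ((CRInt (fun t => g (t, y)) x (x + u) - RtoC u * g (x, y))
          + Ci * (CRInt (fun s => g ((x + u)%R, s)) y (y + v) - RtoC v * g (x, y)))%C
    by (apply injective_projections; simpl; ring).
  eapply Rle_trans; [apply Cmod_triangle|]. rewrite Cmod_mult, Cmod_Ci, Rmult_1_l.
  enough (Cmod (CRInt (fun t => g (t, y)) x (x + u) - RtoC u * g (x, y)) <= Rabs u * (eps / 2) /\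
          Cmod (CRInt (fun s => g ((x + u)%R, s)) y (y + v) - RtoC v * g (x, y)) <= Rabs v * (eps / 2))
    by (assert (Rabs u * (eps / 2) <= Cmod (u, v) * (eps / 2)) by (apply Rmult_le_compat_r; lra);
        assert (Rabs v * (eps / 2) <= Cmod (u, v) * (eps / 2)) by (apply Rmult_le_compat_r; lra); lra).
  split; [apply E1 | apply E2]; intros s Hs; apply Rlt_le, K1;
    apply Rabs_between in Hs; rewrite Rplus_minus_l in Hs.
  - replace ((s, y) - (x, y))%C with (((s - x)%R, 0) : C) by (apply injective_projections; simpl; ring).
    eapply Rle_lt_trans; [apply Cmod_pair_le|]. rewrite Rabs_R0. lra.
  - replace (((x + u)%R, s) - (x, y))%C with ((u, (s - y)%R) : C) by (apply injective_projections; simpl; ring).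
    eapply Rle_lt_trans; [apply Cmod_pair_le|]. lra.
Qed.

Lemma circle_integral_eq0 (r : R) : 0 <= r < 1 ->
  CRInt (fun t => (g (circ r t) * (Ci * circ r t))%C) 0 (2 * PI) = RtoC 0.
Proof.
  intros Hr. rewrite (CRInt_comp_deriv (prim g) g (circ r) (fun t => Ci * circ r t)%C).
  - replace (circ r (2 * PI)) with (circ r 0)
      by (unfold circ; rewrite cos_2PI, sin_2PI, cos_0, sin_0; reflexivity).
    apply Cplus_opp_r.
  - intros t _. repeat split.
    + apply rdiff_circ.
    + apply prim_cdiff, in_disk_circ, Hr.
    + apply cont_at_mult; [apply cont_at_comp; [apply rcont_circ | apply g_cont, in_disk_circ, Hr]|].
      apply cont_at_mult; [apply cont_at_const | apply rcont_circ].
Qed.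

End Primitive.

(** * The Cauchy integral formula on circles *)

Lemma cdiff_inv_shift (w z : C) : z <> w ->
  cdiff (fun y => / (y - w))%C z (- / ((z - w) * (z - w)))%C.
Proof.
  intros Hzw eps Heps.
  set (a := (z - w)%C). assert (Ha : a <> RtoC 0) by apply Cminus_neq_0, Hzw.
  set (m := Cmod a). assert (Hm : 0 < m) by (apply Cmod_gt_0; auto).
  exists (Rmin (m / 2) (eps * (m * m * m) / 2)).
  split; [apply Rmin_pos; [lra | apply Rdiv_lt_0_compat; [repeat apply Rmult_lt_0_compat|]; lra]|].
  intros y Hy. set (b := (y - w)%C).
  assert (Hy1 : Cmod (y - z) < m / 2) by (eapply Rlt_le_trans; [exact Hy | apply Rmin_l]).
  assert (Hy2 : Cmod (y - z) < eps * (m * m * m) / 2) by (eapply Rlt_le_trans; [exact Hy | apply Rmin_r]).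
  assert (Hb : m / 2 <= Cmod b).
  { assert (T := Cmod_triangle b (- (y - z))). rewrite Cmod_opp in T.
    replace (b + - (y - z))%C with a in T by (unfold a, b; ring). fold m in T. lra. }
  assert (Hb0 : b <> RtoC 0) by (intros E; rewrite E, Cmod_0 in Hb; lra).
  replace (/ b - / a - (y - z) * - / (a * a))%C with ((y - z) * (y - z) / (a * a * b))%C
    by (replace (y - z)%C with (b - a)%C by (unfold a, b; ring); field; auto).
  rewrite Cmod_div, !Cmod_mult by (repeat apply Cmult_neq_0; auto). fold m.
  pose proof (Cmod_ge_0 (y - z)).
  apply Rle_trans with (Cmod (y - z) * Cmod (y - z) / (m * m * (m / 2))).
  { unfold Rdiv. apply Rmult_le_compat_l; [nra|].
    apply Rinv_le_contravar; [nra | apply Rmult_le_compat_l; nra]. }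
  apply Rle_trans with ((eps * (m * m * m) / 2) * Cmod (y - z) / (m * m * (m / 2))).
  { unfold Rdiv. apply Rmult_le_compat_r; [apply Rlt_le, Rinv_0_lt_compat; nra|].
    rewrite (Rmult_comm (eps * _ * _)). apply Rmult_le_compat_l; lra. }
  right. field. lra.
Qed.

Definition diff_quot (f : C -> C) (w l : C) (z : C) : C :=
  if excluded_middle_informative (z = w) then l else ((f z - f w) / (z - w))%C.

Lemma holo_at_diff_quot (f : C -> C) (w l z : C) : z <> w -> holo_at f z ->
  holo_at (diff_quot f w l) z.
Proof.
  intros Hzw Hf.
  assert (Hm : 0 < Cmod (z - w)) by apply Cmod_gt_0, Cminus_neq_0, Hzw.
  assert (Hq : holo_at (fun y => ((f y - f w) * / (y - w))%C) z).
  { apply holo_at_mult; [apply holo_at_minus; [exact Hf | apply holo_at_const]|].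
    eexists. apply is_derive_C_cdiff, cdiff_inv_shift, Hzw. }
  destruct Hq as [l' Hl']. exists l'. rewrite is_derive_C_CA in Hl' |- *.
  apply (@is_derive_ext_loc C_AbsRing (AbsRing_NormedModule C_AbsRing)
           (fun y => ((f y - f w) * / (y - w))%C)); [|exact Hl'].
  exists (mkposreal _ Hm). intros y Hy. unfold diff_quot.
  destruct excluded_middle_informative as [->|E]; [|reflexivity].
  exfalso. change (Cmod (w - z) < Cmod (z - w)) in Hy.
  rewrite <- Cmod_opp in Hy. replace (- (w - z))%C with (z - w)%C in Hy by ring. lra.
Qed.

Lemma ccont_diff_quot (f : C -> C) (w l : C) : cdiff f w l -> ccont (diff_quot f w l) w.
Proof.
  intros Hf eps Heps. destruct (Hf (eps / 2)) as [d [Hd K]]; [lra|].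
  exists d. split; auto. intros y Hy. unfold diff_quot.
  destruct excluded_middle_informative as [->|E];
    destruct excluded_middle_informative as [_|E2]; try congruence.
  { replace (l - l)%C with (RtoC 0) by ring. rewrite Cmod_0. exact Heps. }
  assert (Hn : (y - w)%C <> RtoC 0) by apply Cminus_neq_0, E.
  assert (Hm : 0 < Cmod (y - w)) by (apply Cmod_gt_0, Hn).
  replace ((f y - f w) / (y - w) - l)%C with ((f y - f w - (y - w) * l) / (y - w))%C by (field; auto).
  rewrite Cmod_div by auto. specialize (K y Hy).
  apply Rle_lt_trans with (eps / 2); [|lra].
  apply Rmult_le_reg_r with (Cmod (y - w)); [exact Hm|].
  unfold Rdiv. rewrite Rmult_assoc, Rinv_l by lra. lra.
Qed.

Definition cauchy_kernel (r : R) (w : C) (t : R) : C := (circ r t / (circ r t - w))%C.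

Lemma circ_neq (r t : R) (w : C) : Cmod w < r -> circ r t <> w.
Proof.
  intros Hw E. rewrite <- E, Cmod_circ in Hw.
  pose proof (Rle_abs r). lra.
Qed.

Lemma circ_minus_neq0 (r t : R) (w : C) : Cmod w < r -> (circ r t - w)%C <> RtoC 0.
Proof. intros Hw. apply Cminus_neq_0, circ_neq, Hw. Qed.

Lemma rcont_cauchy_kernel (r : R) (w : C) (t : R) : Cmod w < r -> rcont (cauchy_kernel r w) t.
Proof.
  intros Hw. apply cont_at_mult; [apply rcont_circ|].
  apply (cont_at_comp _ _ (fun y => / (y - w))%C (circ r)); [apply rcont_circ|].
  apply (ccont_of_cdiff _ _ _ (cdiff_inv_shift w (circ r t) (circ_neq r t w Hw))).
Qed.

Lemma rcont_comp_circ (f : C -> C) (r t : R) : holomorphic_on_disk f -> 0 <= r < 1 ->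
  rcont (fun t => f (circ r t)) t.
Proof.
  intros Hf Hr. apply (cont_at_comp _ _ f (circ r)); [apply rcont_circ|].
  apply ccont_of_holo_at, Hf, in_disk_circ, Hr.
Qed.

(* Goursat's theorem with the exceptional point [w] applies to the difference
   quotient of [f] at [w]; its circle integral is [\int (f - f w) K]. *)
Theorem cauchy_kernel_integral (f : C -> C) (w : C) (r : R) :
  holomorphic_on_disk f -> 0 <= r < 1 -> Cmod w < r ->
  CRInt (fun t => (f (circ r t) * cauchy_kernel r w t)%C) 0 (2 * PI) =
  (f w * CRInt (cauchy_kernel r w) 0 (2 * PI))%C.
Proof.
  intros Hf Hr Hw.
  destruct (holo_at_cdiff f w (Hf w ltac:(unfold in_disk; lra))) as [l Hl].
  set (g := diff_quot f w l).
  assert (Hg : forall z, in_disk z -> ccont g z).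
  { intros z Hz. destruct (excluded_middle_informative (z = w)) as [->|E].
    - apply ccont_diff_quot, Hl.
    - apply ccont_of_holo_at, holo_at_diff_quot; [exact E | apply Hf, Hz]. }
  assert (Hrect : forall a b c d, (forall z, inrect a b c d z -> in_disk z) -> Irect g a b c d = RtoC 0).
  { intros a b c d Hin. apply (Irect_except_eq0 g a b c d w).
    - intros z Hz. apply Hg, Hin, Hz.
    - intros z Hz Hzw. apply holo_at_diff_quot; [exact Hzw | apply Hf, Hin, Hz]. }
  assert (Z := circle_integral_eq0 g Hg Hrect r Hr).
  rewrite (CRInt_ext _ (fun t => Ci * (f (circ r t) * cauchy_kernel r w t - f w * cauchy_kernel r w t))%C) in Z.
  2: { intros t. unfold g, diff_quot, cauchy_kernel.
       destruct excluded_middle_informative as [E|E].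
       - exfalso. apply (circ_neq r t w Hw), E.
       - field. apply (circ_minus_neq0 r t w Hw). }
  assert (IK : CexRInt (cauchy_kernel r w) 0 (2 * PI))
    by (apply ex_RInt_of_rcont; intros; apply rcont_cauchy_kernel, Hw).
  assert (I1 : CexRInt (fun t => (f (circ r t) * cauchy_kernel r w t)%C) 0 (2 * PI)).
  { apply ex_RInt_of_rcont. intros t _.
    apply cont_at_mult; [apply rcont_comp_circ; auto | apply rcont_cauchy_kernel, Hw]. }
  rewrite CRInt_Cmult, CRInt_minus, CRInt_Cmult in Z by (auto using ex_RInt_Cmult, ex_RInt_minus).
  set (A := CRInt (fun t => (f (circ r t) * cauchy_kernel r w t)%C) 0 (2 * PI)) in *.
  set (B := CRInt (cauchy_kernel r w) 0 (2 * PI)) in *.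
  replace A with (f w * B + (- Ci) * (Ci * (A - f w * B)))%C by (apply injective_projections; simpl; ring).
  rewrite Z. apply injective_projections; simpl; ring.
Qed.

(** * Taylor expansion on a circle *)

(* [fourier_mode n t = exp (- i n t)]. *)
Definition fourier_mode (n : nat) (t : R) : C := ((cos (INR n * t))%R, (- sin (INR n * t))%R).

Lemma fourier_mode_0 (t : R) : fourier_mode 0 t = RtoC 1.
Proof.
  unfold fourier_mode. simpl. rewrite Rmult_0_l, cos_0, sin_0.
  apply injective_projections; simpl; ring.
Qed.

Lemma fourier_mode_pow (n : nat) (t : R) : Cpow (fourier_mode 1 t) n = fourier_mode n t.
Proof.
  induction n as [|n IH]; simpl; [now rewrite fourier_mode_0|]. rewrite IH.
  unfold fourier_mode. change (INR 1) with 1. rewrite S_INR, Rmult_1_l.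
  replace ((INR n + 1) * t) with (t + INR n * t) by ring.
  rewrite cos_plus, sin_plus. apply injective_projections; simpl; ring.
Qed.

Lemma Cmod_fourier_mode (n : nat) (t : R) : Cmod (fourier_mode n t) = 1.
Proof.
  unfold fourier_mode, Cmod; simpl.
  replace (cos (INR n * t) * (cos (INR n * t) * 1) + - sin (INR n * t) * (- sin (INR n * t) * 1))
    with ((sin (INR n * t))² + (cos (INR n * t))²) by (unfold Rsqr; ring).
  rewrite sin2_cos2. apply sqrt_1.
Qed.

Lemma rcont_fourier_mode (n : nat) (t : R) : rcont (fourier_mode n) t.
Proof.
  apply rcont_pair; apply continuity_pt_filterlim;
    [apply (ex_derive_continuous (fun s => cos (INR n * s)))
    | apply (ex_derive_continuous (fun s => - sin (INR n * s)))]; auto_derive; auto.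
Qed.

Lemma circ_fourier_mode (r t : R) : (circ r t * fourier_mode 1 t)%C = RtoC r.
Proof.
  unfold circ, fourier_mode. simpl. rewrite Rmult_1_l. apply injective_projections; simpl.
  - replace (r * cos t * cos t - r * sin t * - sin t) with (r * ((sin t)² + (cos t)²)) by (unfold Rsqr; ring).
    rewrite sin2_cos2. ring.
  - ring.
Qed.

Lemma CRInt_fourier_mode (n : nat) :
  CRInt (fourier_mode n) 0 (2 * PI) = if Nat.eq_dec n 0 then RtoC (2 * PI) else RtoC 0.
Proof.
  apply CRInt_unique. destruct (Nat.eq_dec n 0) as [->|Hn].
  - apply (is_RInt_ext (fun _ => RtoC 1)); [intros; rewrite fourier_mode_0; reflexivity|].
    replace (RtoC (2 * PI)) with (@scal R_Ring C_R_ModuleSpace (2 * PI - 0) (RtoC 1))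
      by (rewrite scal_CR; apply injective_projections; simpl; ring).
    apply (@is_RInt_const C_R_NormedModule).
  - assert (Hn' : INR n <> 0) by (apply not_0_INR, Hn).
    assert (Per : forall (h : R -> R), h (INR n * (2 * PI)) = h 0 ->
        forall dh, (forall x, is_derive (fun t => h (INR n * t) / INR n) x (dh x)) ->
        (forall x, continuous dh x) -> is_RInt dh 0 (2 * PI) 0).
    { intros h Hh dh Hd Hc.
      assert (H : is_RInt dh 0 (2 * PI) (minus (h (INR n * (2 * PI)) / INR n) (h (INR n * 0) / INR n)))
        by (apply (is_RInt_derive (fun t => h (INR n * t) / INR n)); auto).
      rewrite Hh, Rmult_0_r, minus_eq_zero in H. exact H. }
    replace (RtoC 0) with ((0, 0) : C) by reflexivity.
    assert (Hper : INR n * (2 * PI) = 0 + 2 * INR n * PI) by ring.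
    apply is_RInt_C_pair; simpl.
    + apply (Per sin); [rewrite Hper, sin_period; reflexivity | intros x; auto_derive; auto; field; auto|].
      intros x. apply (ex_derive_continuous (fun t => cos (INR n * t))). auto_derive; auto.
    + apply (Per cos); [rewrite Hper, cos_period; reflexivity | intros x; auto_derive; auto; field; auto|].
      intros x. apply (ex_derive_continuous (fun t => - sin (INR n * t))). auto_derive; auto.
Qed.

Lemma psum_ext (a b : nat -> C) (N : nat) : (forall k, a k = b k) -> psum a N = psum b N.
Proof. intros H. induction N as [|N IH]; simpl; [reflexivity | now rewrite IH, H]. Qed.

Lemma psum_scal (c : C) (a : nat -> C) (N : nat) : (c * psum a N)%C = psum (fun n => c * a n)%C N.
Proof. induction N as [|N IH]; simpl; [ring | rewrite <- IH; ring]. Qed.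

Lemma psum_geom (q Q : C) (N : nat) : (Q - q * Q)%C = RtoC 1 ->
  Q = (psum (Cpow q) N + Cpow q N * Q)%C.
Proof.
  intros H. induction N as [|N IH]; simpl; [ring|].
  rewrite IH at 1.
  replace (Cpow q N * Q)%C with (Cpow q N * (Q - q * Q) + Cpow q N * (q * Q))%C at 1 by ring.
  rewrite H. ring.
Qed.

Lemma CRInt_psum (F : nat -> R -> C) (c : nat -> C) a b (N : nat) :
  (forall n, CexRInt (F n) a b) ->
  CexRInt (fun t => psum (fun n => c n * F n t)%C N) a b /\
  CRInt (fun t => psum (fun n => c n * F n t)%C N) a b = psum (fun n => c n * CRInt (F n) a b)%C N.
Proof.
  intros H. induction N as [|N [IH1 IH2]]; simpl.
  - split; [apply (@ex_RInt_const C_R_CompleteNormedModule)|]. rewrite CRInt_const. ring.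
  - split; [apply (@ex_RInt_plus C_R_CompleteNormedModule); auto using ex_RInt_Cmult|].
    rewrite CRInt_plus, IH2, CRInt_Cmult; auto using ex_RInt_Cmult.
Qed.

Lemma cauchy_kernel_geom (r : R) (w : C) (t : R) : 0 < r -> Cmod w < r ->
  (cauchy_kernel r w t - (w * RtoC (/ r) * fourier_mode 1 t) * cauchy_kernel r w t)%C = RtoC 1.
Proof.
  intros Hr Hw. unfold cauchy_kernel.
  assert (H0 : circ r t <> RtoC 0).
  { intros E. assert (Cmod (circ r t) = 0) by (rewrite E; apply Cmod_0).
    rewrite Cmod_circ in H. apply Rabs_eq_0 in H. lra. }
  replace (fourier_mode 1 t) with (RtoC r / circ r t)%C
    by (rewrite <- (circ_fourier_mode r t); field; exact H0).
  rewrite RtoC_inv by lra. field.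
  split; [apply (circ_minus_neq0 r t w Hw) | split; [exact H0 | intros E; injection E; lra]].
Qed.

Lemma Cmod_cauchy_kernel (r : R) (w : C) (t : R) : 0 < r -> Cmod w < r ->
  Cmod (cauchy_kernel r w t) <= r / (r - Cmod w).
Proof.
  intros Hr Hw. unfold cauchy_kernel.
  rewrite Cmod_div, Cmod_circ, Rabs_right by (apply (circ_minus_neq0 r t w Hw) || lra).
  assert (T := Cmod_triangle (circ r t - w) w). replace (circ r t - w + w)%C with (circ r t) in T by ring.
  rewrite Cmod_circ, Rabs_right in T by lra.
  unfold Rdiv. apply Rmult_le_compat_l; [lra|]. apply Rinv_le_contravar; lra.
Qed.

(* Expanding the kernel as a geometric series in [(w / r) exp (- i t)]. *)
Theorem cauchy_kernel_expansion (p : R -> C) (r : R) (w : C) (N : nat) (M : R) :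
  0 < r -> Cmod w < r -> (forall t, rcont p t) ->
  (forall t, 0 <= t <= 2 * PI -> Cmod (p t) <= M) ->
  Cmod (CRInt (fun t => (p t * cauchy_kernel r w t)%C) 0 (2 * PI) -
        psum (fun n => Cpow (w * RtoC (/ r)) n * CRInt (fun t => (p t * fourier_mode n t)%C) 0 (2 * PI))%C N)
  <= 2 * PI * (M * ((Cmod w / r) ^ N * (r / (r - Cmod w)))).
Proof.
  intros Hr Hw Hp HM.
  set (q := fun t => (w * RtoC (/ r) * fourier_mode 1 t)%C).
  set (rem := fun t => (p t * (Cpow (q t) N * cauchy_kernel r w t))%C).
  assert (Split : forall t, (p t * cauchy_kernel r w t)%C =
     (psum (fun n => Cpow (w * RtoC (/ r)) n * (p t * fourier_mode n t))%C N + rem t)%C).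
  { intros t. rewrite (psum_geom (q t) (cauchy_kernel r w t) N) at 1 by (apply cauchy_kernel_geom; auto).
    unfold rem. rewrite Cmult_plus_distr_l, psum_scal. f_equal. apply psum_ext. intros n.
    unfold q. rewrite Cpow_mult_l, fourier_mode_pow. ring. }
  assert (IE : forall n, CexRInt (fun s => (p s * fourier_mode n s)%C) 0 (2 * PI))
    by (intros n; apply ex_RInt_of_rcont; intros; apply cont_at_mult; [apply Hp | apply rcont_fourier_mode]).
  destruct (CRInt_psum (fun n s => (p s * fourier_mode n s)%C) (fun n => Cpow (w * RtoC (/ r)) n)
              0 (2 * PI) N IE) as [Ps1 Ps2].
  assert (Hq : forall t, rcont (fun s => Cpow (q s) N) t).
  { intros t. apply cont_at_pow, cont_at_mult; [apply cont_at_const | apply rcont_fourier_mode]. }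
  assert (Irem : CexRInt rem 0 (2 * PI)).
  { apply ex_RInt_of_rcont. intros t _. apply cont_at_mult; [apply Hp|].
    apply cont_at_mult; [apply Hq | apply rcont_cauchy_kernel, Hw]. }
  rewrite (CRInt_ext _ _ _ _ Split), CRInt_plus, Ps2 by assumption.
  assert (Cancel : forall A B : C, (A + B - A)%C = B) by (intros; ring). rewrite Cancel.
  replace (2 * PI) with (Rabs (2 * PI - 0)) at 2
    by (rewrite Rminus_0_r, Rabs_right; [ring | pose proof PI_RGT_0; lra]).
  apply Cmod_CRInt_le_const; [exact Irem|]. intros t Ht.
  rewrite Rmin_left, Rmax_right in Ht by (pose proof PI_RGT_0; lra).
  specialize (HM t Ht). unfold rem. rewrite !Cmod_mult, Cmod_pow.
  assert (Cq : Cmod (q t) = Cmod w / r).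
  { unfold q. rewrite !Cmod_mult, Cmod_fourier_mode, Cmod_R, Rabs_right; [field; lra|].
    apply Rle_ge, Rlt_le, Rinv_0_lt_compat, Hr. }
  rewrite Cq. pose proof (Cmod_cauchy_kernel r w t Hr Hw). pose proof (Cmod_ge_0 (p t)).
  assert (0 <= (Cmod w / r) ^ N) by (apply pow_le, Rdiv_le_0_compat; [apply Cmod_ge_0 | lra]).
  apply Rmult_le_compat; [apply Cmod_ge_0 | apply Rmult_le_pos; [auto | apply Cmod_ge_0] | exact HM|].
  apply Rmult_le_compat_l; auto.
Qed.

Lemma le_geom_eq0 (x K rho : R) : 0 <= x -> 0 <= rho < 1 -> 0 <= K ->
  (forall N, x <= K * rho ^ N) -> x = 0.
Proof.
  intros Hx Hrho HK H. apply Rle_antisym; [|exact Hx]. apply Rnot_lt_le. intros Hpos.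
  destruct (pow_small_eventually rho K x Hrho HK Hpos) as [N HN]. specialize (H N). lra.
Qed.

Lemma CRInt_cauchy_kernel (r : R) (w : C) : 0 < r -> Cmod w < r ->
  CRInt (cauchy_kernel r w) 0 (2 * PI) = RtoC (2 * PI).
Proof.
  intros Hr Hw. set (rho := Cmod w / r).
  assert (Hrho : 0 <= rho < 1).
  { unfold rho. split; [apply Rdiv_le_0_compat; [apply Cmod_ge_0 | lra]|].
    apply Rmult_lt_reg_r with r; [lra|]. unfold Rdiv. rewrite Rmult_assoc, Rinv_l by lra. lra. }
  assert (Modes : forall N, psum (fun n => Cpow (w * RtoC (/ r)) n *
      CRInt (fun t => (RtoC 1 * fourier_mode n t)%C) 0 (2 * PI))%C (S N) = RtoC (2 * PI)).
  { assert (Mode : forall n, CRInt (fun t => (RtoC 1 * fourier_mode n t)%C) 0 (2 * PI) =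
        if Nat.eq_dec n 0 then RtoC (2 * PI) else RtoC 0)
      by (intros n; rewrite <- CRInt_fourier_mode; apply CRInt_ext; intros; ring).
    induction N as [|N IH].
    - simpl. rewrite Mode. simpl. ring.
    - change (psum ?f (S (S N))) with (psum f (S N) + f (S N))%C.
      rewrite IH, Mode. simpl. ring. }
  assert (HK : 0 <= 2 * PI * (r / (r - Cmod w)) * rho)
    by (pose proof PI_RGT_0; apply Rmult_le_pos; [apply Rmult_le_pos; [lra|] | lra];
        apply Rdiv_le_0_compat; lra).
  assert (Bound : forall N, Cmod (CRInt (cauchy_kernel r w) 0 (2 * PI) - RtoC (2 * PI))
                            <= 2 * PI * (r / (r - Cmod w)) * rho * rho ^ N).
  { intros N.
    assert (E := cauchy_kernel_expansion (fun _ => RtoC 1) r w (S N) 1 Hr Hw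
                   (fun t => cont_at_const _ t _) ltac:(intros; cbv beta; rewrite Cmod_R, Rabs_R1; lra)).
    rewrite Modes, (CRInt_ext _ (cauchy_kernel r w)) in E by (intros; ring).
    eapply Rle_trans; [exact E|]. fold rho. right. simpl. ring. }
  assert (Zero := le_geom_eq0 _ _ rho (Cmod_ge_0 _) Hrho HK Bound). apply Cmod_eq_0 in Zero.
  replace (CRInt (cauchy_kernel r w) 0 (2 * PI))
    with (CRInt (cauchy_kernel r w) 0 (2 * PI) - RtoC (2 * PI) + RtoC (2 * PI))%C
    by (apply injective_projections; simpl; ring).
  rewrite Zero. apply injective_projections; simpl; ring.
Qed.

Definition taylor_coef (f : C -> C) (r : R) (n : nat) : C :=
  (RtoC (/ (2 * PI)) * Cpow (RtoC (/ r)) n *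
   CRInt (fun t => (f (circ r t) * fourier_mode n t)%C) 0 (2 * PI))%C.

Theorem taylor_remainder_bound (f : C -> C) (r : R) (w : C) (N : nat) (M : R) :
  holomorphic_on_disk f -> 0 < r < 1 -> Cmod w < r ->
  (forall t, 0 <= t <= 2 * PI -> Cmod (f (circ r t)) <= M) ->
  Cmod (f w - psum (fun n => taylor_coef f r n * Cpow w n)%C N)
  <= M * ((Cmod w / r) ^ N * (r / (r - Cmod w))).
Proof.
  intros Hf Hr Hw HM. assert (P : 0 < 2 * PI) by (pose proof PI_RGT_0; lra).
  assert (E := cauchy_kernel_expansion (fun t => f (circ r t)) r w N M ltac:(lra) Hw
                 (fun t => rcont_comp_circ f r t Hf ltac:(lra)) HM).
  cbv beta in E. rewrite cauchy_kernel_integral, CRInt_cauchy_kernel in E by (auto; lra).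
  replace (f w - psum (fun n => taylor_coef f r n * Cpow w n)%C N)%C
    with (RtoC (/ (2 * PI)) * (f w * RtoC (2 * PI) - psum (fun n => Cpow (w * RtoC (/ r)) n *
            CRInt (fun t => (f (circ r t) * fourier_mode n t)%C) 0 (2 * PI))%C N))%C.
  - rewrite Cmod_mult, Cmod_R, Rabs_right by (apply Rle_ge, Rlt_le, Rinv_0_lt_compat; lra).
    apply Rmult_le_reg_l with (2 * PI); [exact P|].
    rewrite <- Rmult_assoc, Rinv_r, Rmult_1_l by lra. exact E.
  - assert (D : forall a b c : C, (a * (b - c))%C = (a * b - a * c)%C) by (intros; ring).
    rewrite D, psum_scal. f_equal.
    + rewrite (Cmult_comm (f w)), Cmult_assoc, <- RtoC_mult, Rinv_l by lra. ring.
    + apply psum_ext. intros n. unfold taylor_coef. rewrite Cpow_mult_l. ring.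
Qed.

(** * The Hardy space and the Taylor coefficient functionals *)

Lemma H2n_ge (f : C -> C) (r : R) : in_H2 f -> 0 <= r < 1 -> sqrt (circle_mean2 f r) <= H2n f.
Proof.
  intros [_ Hfin] Hr. unfold H2n, H2norm in *.
  destruct (Lub_Rbar_correct (fun x => exists r : R, 0 <= r < 1 /\ x = sqrt (circle_mean2 f r)))
    as [Hub _].
  specialize (Hub _ (ex_intro _ r (conj Hr eq_refl))).
  destruct (Lub_Rbar _); simpl in *; [exact Hub | discriminate | discriminate].
Qed.

Lemma H2n_nonneg (f : C -> C) : 0 <= H2n f.
Proof.
  unfold H2n, H2norm.
  destruct (Lub_Rbar_correct (fun x => exists r : R, 0 <= r < 1 /\ x = sqrt (circle_mean2 f r)))
    as [Hub _].
  assert (H0 := Hub _ (ex_intro _ 0 (conj (conj (Rle_refl 0) Rlt_0_1) eq_refl))).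
  pose proof (sqrt_pos (circle_mean2 f 0)).
  destruct (Lub_Rbar _); simpl in *; lra.
Qed.

Lemma H2norm_le (f : C -> C) (B : R) : (forall r, 0 <= r < 1 -> sqrt (circle_mean2 f r) <= B) ->
  is_finite (H2norm f) /\ H2n f <= B.
Proof.
  intros H. unfold H2n, H2norm.
  destruct (Lub_Rbar_correct (fun x => exists r : R, 0 <= r < 1 /\ x = sqrt (circle_mean2 f r)))
    as [Hub Hlub].
  assert (L := Hlub (Finite B) ltac:(intros x [r [Hr ->]]; apply H, Hr)).
  assert (H0 := Hub _ (ex_intro _ 0 (conj (conj (Rle_refl 0) Rlt_0_1) eq_refl))).
  destruct (Lub_Rbar _); simpl in *; try contradiction. split; [reflexivity | exact L].
Qed.

Lemma circle_mean2_circ (f : C -> C) (r : R) :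
  circle_mean2 f r = / (2 * PI) * RInt (fun t => Cmod (f (circ r t)) ^ 2) 0 (2 * PI).
Proof. reflexivity. Qed.

Lemma continuity_pt_Cmod_sqr (h : R -> C) (t : R) : rcont h t ->
  continuity_pt (fun s => Cmod (h s) ^ 2) t.
Proof.
  intros Hh. apply (continuity_pt_ext (fun s => Cmod (h s) * (Cmod (h s) * 1))); [intros; reflexivity|].
  apply continuity_pt_mult; [|apply continuity_pt_mult; [|apply continuity_pt_const; now intros ? ?]];
    apply continuity_pt_Cmod, Hh.
Qed.

Lemma ex_RInt_circle_Cmod_sqr (F : C -> C) (r : R) : 0 <= r < 1 ->
  (forall z, in_disk z -> ccont F z) -> ex_RInt (fun t => Cmod (F (circ r t)) ^ 2) 0 (2 * PI).
Proof.
  intros Hr HF. apply (@ex_RInt_continuous R_CompleteNormedModule). intros t _.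
  apply continuity_pt_filterlim, continuity_pt_Cmod_sqr.
  apply cont_at_comp; [apply rcont_circ | apply HF, in_disk_circ, Hr].
Qed.

Lemma H2n_mult_le (psi g : C -> C) (B : R) : in_H2 psi -> 0 <= B ->
  (forall z, in_disk z -> ccont g z) -> (forall z, in_disk z -> Cmod (g z) <= B) ->
  is_finite (H2norm (fun z => (psi z * g z)%C)) /\ H2n (fun z => (psi z * g z)%C) <= B * H2n psi.
Proof.
  intros Hpsi HB Hgc Hgb. apply H2norm_le. intros r Hr.
  apply Rle_trans with (B * sqrt (circle_mean2 psi r)); [|apply Rmult_le_compat_l, H2n_ge; auto].
  rewrite <- (sqrt_Rsqr B), <- sqrt_mult_alt by (auto; apply Rle_0_sqr).
  apply sqrt_le_1_alt. rewrite !circle_mean2_circ.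
  assert (P : 0 < 2 * PI) by (pose proof PI_RGT_0; lra).
  assert (Ip := ex_RInt_circle_Cmod_sqr psi r Hr (fun z Hz => ccont_of_holo_at _ _ (proj1 Hpsi z Hz))).
  assert (Ipg : ex_RInt (fun t => Cmod (psi (circ r t) * g (circ r t)) ^ 2) 0 (2 * PI)).
  { apply (ex_RInt_circle_Cmod_sqr (fun z => (psi z * g z)%C) r Hr). intros z Hz.
    apply cont_at_mult; [apply ccont_of_holo_at, Hpsi, Hz | apply Hgc, Hz]. }
  replace (B² * (/ (2 * PI) * RInt (fun t => Cmod (psi (circ r t)) ^ 2) 0 (2 * PI)))
    with (/ (2 * PI) * RInt (fun t => B² * Cmod (psi (circ r t)) ^ 2) 0 (2 * PI))
    by (rewrite (RInt_scal (V := R_CompleteNormedModule)) by exact Ip;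
        unfold scal; simpl; unfold mult; simpl; ring).
  apply Rmult_le_compat_l; [apply Rlt_le, Rinv_0_lt_compat, P|].
  apply RInt_le; [lra | exact Ipg | apply (@ex_RInt_scal R_CompleteNormedModule), Ip|].
  intros t _. rewrite Cmod_mult. unfold Rsqr. cbn - [Cmod].
  assert (Hg := Hgb _ (in_disk_circ r t Hr)). pose proof (Cmod_ge_0 (g (circ r t))).
  pose proof (Cmod_ge_0 (psi (circ r t))). rewrite !Rmult_1_r.
  assert (Cmod (g (circ r t)) * Cmod (g (circ r t)) <= B * B) by (apply Rmult_le_compat; auto).
  nra.
Qed.

(* [0 <= mean ((u - mean u)^2) = mean (u^2) - (mean u)^2]. *)
Lemma mean_sqr_le (u : R -> R) : ex_RInt u 0 (2 * PI) -> ex_RInt (fun t => u t ^ 2) 0 (2 * PI) ->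
  (/ (2 * PI) * RInt u 0 (2 * PI)) ^ 2 <= / (2 * PI) * RInt (fun t => u t ^ 2) 0 (2 * PI).
Proof.
  intros H1 H2. assert (P : 0 < 2 * PI) by (pose proof PI_RGT_0; lra).
  set (I1 := RInt u 0 (2 * PI)). set (I2 := RInt (fun t => u t ^ 2) 0 (2 * PI)).
  set (m := / (2 * PI) * I1).
  assert (J : is_RInt (fun t => (u t - m) ^ 2) 0 (2 * PI) (I2 + (-2 * m) * I1 + (2 * PI - 0) * (m * m))).
  { apply (is_RInt_ext (fun t => 1 * (1 * u t ^ 2 + (- 2 * m) * u t) + 1 * (m * m)));
      [intros; simpl; ring|].
    replace (I2 + (-2 * m) * I1 + (2 * PI - 0) * (m * m))
      with (1 * (1 * I2 + (-2 * m) * I1) + 1 * ((2 * PI - 0) * (m * m))) by ring.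
    apply is_RInt_lincomb;
      [apply is_RInt_lincomb; [apply (RInt_correct _ _ _ H2) | apply (RInt_correct _ _ _ H1)]|].
    apply (@is_RInt_const R_NormedModule). }
  assert (Pos : 0 <= I2 + (-2 * m) * I1 + (2 * PI - 0) * (m * m)).
  { rewrite <- (is_RInt_unique _ _ _ _ J). apply RInt_ge_0; [lra | eexists; exact J |].
    intros; apply pow2_ge_0. }
  assert (E : I1 = 2 * PI * m) by (unfold m; rewrite <- Rmult_assoc, Rinv_r, Rmult_1_l by lra; reflexivity).
  rewrite E in Pos. fold m. apply Rmult_le_reg_l with (2 * PI); [exact P|].
  rewrite <- Rmult_assoc, Rinv_r, Rmult_1_l by lra. nra.
Qed.

Lemma ex_RInt_circle_fourier (f : C -> C) (r : R) (n : nat) : holomorphic_on_disk f -> 0 <= r < 1 ->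
  CexRInt (fun t => (f (circ r t) * fourier_mode n t)%C) 0 (2 * PI).
Proof.
  intros Hf Hr. apply ex_RInt_of_rcont. intros t _.
  apply cont_at_mult; [apply rcont_comp_circ; auto | apply rcont_fourier_mode].
Qed.

Lemma taylor_coef_bound (f : C -> C) (r : R) (n : nat) : holomorphic_on_disk f -> 0 < r < 1 ->
  Cmod (taylor_coef f r n) * r ^ n <= sqrt (circle_mean2 f r).
Proof.
  intros Hf Hr. assert (P : 0 < 2 * PI) by (pose proof PI_RGT_0; lra).
  assert (Rc : forall t, rcont (fun t => f (circ r t)) t) by (intros; apply rcont_comp_circ; auto; lra).
  assert (Iu : ex_RInt (fun t => Cmod (f (circ r t))) 0 (2 * PI))
    by (apply (@ex_RInt_continuous R_CompleteNormedModule); intros t _;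
        apply continuity_pt_filterlim, continuity_pt_Cmod, Rc).
  assert (Iu2 : ex_RInt (fun t => Cmod (f (circ r t)) ^ 2) 0 (2 * PI))
    by (apply ex_RInt_circle_Cmod_sqr; [lra | intros; apply ccont_of_holo_at, Hf; auto]).
  assert (IJ := ex_RInt_circle_fourier f r n Hf ltac:(lra)).
  assert (Unit : forall t, Cmod (f (circ r t) * fourier_mode n t)%C = Cmod (f (circ r t)))
    by (intros; rewrite Cmod_mult, Cmod_fourier_mode, Rmult_1_r; reflexivity).
  set (J := CRInt (fun t => (f (circ r t) * fourier_mode n t)%C) 0 (2 * PI)).
  assert (BJ : Cmod J <= RInt (fun t => Cmod (f (circ r t))) 0 (2 * PI)).
  { rewrite <- (RInt_ext (fun t => Cmod (f (circ r t) * fourier_mode n t)%C)) by (intros; apply Unit).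
    apply Cmod_CRInt_le; [lra | exact IJ |].
    apply (ex_RInt_ext (fun t => Cmod (f (circ r t)))); [intros; symmetry; apply Unit | exact Iu]. }
  unfold taylor_coef. fold J. rewrite !Cmod_mult, Cmod_pow, !Cmod_R.
  rewrite (Rabs_right (/ (2 * PI))), (Rabs_right (/ r)) by (apply Rle_ge, Rlt_le, Rinv_0_lt_compat; lra).
  replace (/ (2 * PI) * (/ r) ^ n * Cmod J * r ^ n) with (/ (2 * PI) * Cmod J)
    by (rewrite pow_inv; field; split; [apply pow_nonzero; lra | lra]).
  apply Rle_trans with (/ (2 * PI) * RInt (fun t => Cmod (f (circ r t))) 0 (2 * PI));
    [apply Rmult_le_compat_l; [apply Rlt_le, Rinv_0_lt_compat; lra | exact BJ]|].
  rewrite circle_mean2_circ, <- (sqrt_pow2 (/ (2 * PI) * RInt (fun t => Cmod (f (circ r t))) 0 (2 * PI))).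
  - apply sqrt_le_1_alt, mean_sqr_le; assumption.
  - apply Rmult_le_pos; [apply Rlt_le, Rinv_0_lt_compat; lra|].
    apply RInt_ge_0; [lra | exact Iu | intros; apply Cmod_ge_0].
Qed.

Lemma taylor_coef_plus (f g : C -> C) (r : R) (n : nat) :
  holomorphic_on_disk f -> holomorphic_on_disk g -> 0 <= r < 1 ->
  taylor_coef (fun z => (f z + g z)%C) r n = (taylor_coef f r n + taylor_coef g r n)%C.
Proof.
  intros Hf Hg Hr. unfold taylor_coef.
  rewrite (CRInt_ext _ (fun t => (f (circ r t) * fourier_mode n t + g (circ r t) * fourier_mode n t)%C))
    by (intros; ring).
  rewrite CRInt_plus by (apply ex_RInt_circle_fourier; assumption). ring.
Qed.

Lemma taylor_coef_scal (f : C -> C) (c : C) (r : R) (n : nat) : holomorphic_on_disk f -> 0 <= r < 1 ->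
  taylor_coef (fun z => (c * f z)%C) r n = (c * taylor_coef f r n)%C.
Proof.
  intros Hf Hr. unfold taylor_coef.
  rewrite (CRInt_ext _ (fun t => (c * (f (circ r t) * fourier_mode n t))%C)) by (intros; ring).
  rewrite CRInt_Cmult by (apply ex_RInt_circle_fourier; assumption). ring.
Qed.

Lemma taylor_coef_H2_le (f : C -> C) (r : R) (n : nat) : in_H2 f -> 0 < r < 1 ->
  Cmod (taylor_coef f r n) <= (/ r) ^ n * H2n f.
Proof.
  intros Hf Hr. assert (B := taylor_coef_bound f r n (proj1 Hf) Hr).
  assert (B2 := H2n_ge f r Hf ltac:(lra)).
  assert (P : 0 < r ^ n) by (apply pow_lt; lra).
  apply Rmult_le_reg_r with (r ^ n); [exact P|].
  replace ((/ r) ^ n * H2n f * r ^ n) with (H2n f) by (rewrite pow_inv; field; lra). lra.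
Qed.

Lemma H2_functional_taylor_coef (r : R) (n : nat) : 0 < r < 1 ->
  H2_functional (fun f => taylor_coef f r n).
Proof.
  intros Hr. split; [|split].
  - intros f g Hf Hg. apply taylor_coef_plus; [apply Hf | apply Hg | lra].
  - intros c f Hf. apply taylor_coef_scal; [apply Hf | lra].
  - exists ((/ r) ^ n). intros f Hf. apply taylor_coef_H2_le; auto.
Qed.

Lemma in_H2_const (c : C) : in_H2 (fun _ => c) /\ H2n (fun _ => c) = Cmod c.
Proof.
  assert (P : 0 < 2 * PI) by (pose proof PI_RGT_0; lra).
  assert (E : forall r, sqrt (circle_mean2 (fun _ => c) r) = Cmod c).
  { intros r. unfold circle_mean2. rewrite RInt_const.
    change (scal (2 * PI - 0) (Cmod c ^ 2)) with ((2 * PI - 0) * Cmod c ^ 2).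
    replace (/ (2 * PI) * ((2 * PI - 0) * Cmod c ^ 2)) with (Cmod c ^ 2) by (field; lra).
    apply sqrt_pow2, Cmod_ge_0. }
  destruct (H2norm_le (fun _ => c) (Cmod c) ltac:(intros; rewrite E; lra)) as [Hfin Hle].
  assert (Hc : in_H2 (fun _ => c)) by (split; [intros z _; apply holo_at_const | exact Hfin]).
  split; [exact Hc|]. assert (G := H2n_ge _ 0 Hc ltac:(lra)). rewrite E in G. lra.
Qed.

Lemma fnorm_taylor_coef (r : R) (n : nat) : 0 < r < 1 ->
  0 <= real (fnorm (fun f => taylor_coef f r n)) <= (/ r) ^ n.
Proof.
  intros Hr. unfold fnorm.
  destruct (Lub_Rbar_correct (fun x => exists f, in_H2 f /\ H2n f <= 1 /\ x = Cmod (taylor_coef f r n)))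
    as [Hub Hlub].
  assert (Pn : 0 <= (/ r) ^ n) by (apply pow_le, Rlt_le, Rinv_0_lt_compat; lra).
  assert (Up := Hlub (Finite ((/ r) ^ n))).
  assert (L : Rbar_le (Lub_Rbar (fun x => exists f, in_H2 f /\ H2n f <= 1 /\
                        x = Cmod (taylor_coef f r n))) ((/ r) ^ n)).
  { apply Up. intros x [f [Hf [H1 ->]]]. simpl.
    eapply Rle_trans; [apply taylor_coef_H2_le; auto|].
    rewrite <- (Rmult_1_r ((/ r) ^ n)) at 2. apply Rmult_le_compat_l; auto. }
  destruct (in_H2_const (RtoC 0)) as [Z1 Z2].
  assert (Z3 : H2n (fun _ => RtoC 0) <= 1) by (rewrite Z2, Cmod_0; lra).
  assert (U := Hub _ (ex_intro _ (fun _ => RtoC 0) (conj Z1 (conj Z3 eq_refl)))).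
  pose proof (Cmod_ge_0 (taylor_coef (fun _ => RtoC 0) r n)).
  destruct (Lub_Rbar _); simpl in *; try contradiction; split; lra.
Qed.

(** * Nuclearity of weighted composition operators *)

Lemma taylor_tail_bound (f : C -> C) (s r : R) : holomorphic_on_disk f -> 0 <= s < r -> r < 1 ->
  exists M, 0 <= M /\ forall N w, Cmod w <= s ->
    Cmod (f w - psum (fun n => taylor_coef f r n * Cpow w n)%C N) <= M * ((s / r) ^ N * (r / (r - s))).
Proof.
  intros Hf Hs Hr. assert (P : 0 < 2 * PI) by (pose proof PI_RGT_0; lra).
  destruct (continuity_ab_maj (fun t => Cmod (f (circ r t))) 0 (2 * PI)) as [t0 [Ht0 _]]; [lra| |].
  { intros t _. apply continuity_pt_Cmod, rcont_comp_circ; auto; lra. }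
  exists (Cmod (f (circ r t0))). split; [apply Cmod_ge_0|]. intros N w Hw.
  eapply Rle_trans; [apply taylor_remainder_bound; auto; lra|].
  apply Rmult_le_compat_l; [apply Cmod_ge_0|]. pose proof (Cmod_ge_0 w).
  apply Rmult_le_compat; [apply pow_le, Rdiv_le_0_compat; lra | apply Rdiv_le_0_compat; lra | |].
  - apply pow_incr. split; [apply Rdiv_le_0_compat; lra|].
    unfold Rdiv. apply Rmult_le_compat_r; [apply Rlt_le, Rinv_0_lt_compat; lra | exact Hw].
  - unfold Rdiv. apply Rmult_le_compat_l; [lra|]. apply Rinv_le_contravar; lra.
Qed.

Lemma bounded_on_subdisk (f : C -> C) (s : R) : holomorphic_on_disk f -> 0 <= s < 1 ->
  exists B, 0 <= B /\ forall w, Cmod w <= s -> Cmod (f w) <= B.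
Proof.
  intros Hf Hs. destruct (taylor_tail_bound f s ((1 + s) / 2) Hf ltac:(lra) ltac:(lra)) as [M [HM K]].
  exists (M * ((1 + s) / 2 / ((1 + s) / 2 - s))).
  split; [apply Rmult_le_pos; [auto | apply Rdiv_le_0_compat; lra]|].
  intros w Hw. specialize (K 0%nat w Hw). simpl in K.
  replace (f w - RtoC 0)%C with (f w) in K by ring. lra.
Qed.

Lemma holo_at_poly (a : nat -> C) (N : nat) (z : C) :
  holo_at (fun w => psum (fun k => a k * Cpow w k)%C N) z.
Proof.
  induction N as [|N IH]; simpl; [apply holo_at_const|].
  apply holo_at_plus; [exact IH | apply holo_at_mult; [apply holo_at_const | apply holo_at_pow, holo_at_id]].
Qed.

Definition weighted_pow (psi phi : C -> C) (n : nat) (z : C) : C := (psi z * Cpow (phi z) n)%C.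

Section WeightedComposition.

Variables (psi phi : C -> C) (s : R).
Hypotheses (psi_H2 : in_H2 psi) (phi_holo : holomorphic_on_disk phi)
  (phi_le : forall z, in_disk z -> Cmod (phi z) <= s) (s_range : 0 <= s < 1).

Lemma phi_in_disk (z : C) : in_disk z -> in_disk (phi z).
Proof. intros Hz. unfold in_disk. specialize (phi_le z Hz). lra. Qed.

Lemma H2_mult_comp (g : C -> C) (B : R) : holomorphic_on_disk g -> 0 <= B ->
  (forall w, Cmod w <= s -> Cmod (g w) <= B) ->
  in_H2 (fun z => (psi z * g (phi z))%C) /\ H2n (fun z => (psi z * g (phi z))%C) <= B * H2n psi.
Proof.
  intros Hg HB Hbound.
  assert (Hcomp : forall z, in_disk z -> holo_at (fun w => g (phi w)) z)
    by (intros z Hz; apply holo_at_comp; [apply phi_holo, Hz | apply Hg, phi_in_disk, Hz]).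
  destruct (H2n_mult_le psi (fun w => g (phi w)) B psi_H2 HB) as [Hfin Hle].
  - intros z Hz. apply ccont_of_holo_at, Hcomp, Hz.
  - intros z Hz. apply Hbound, phi_le, Hz.
  - split; [split; [|exact Hfin] | exact Hle].
    intros z Hz. apply holo_at_mult; [apply psi_H2, Hz | apply Hcomp, Hz].
Qed.

Lemma weighted_pow_H2 (n : nat) :
  in_H2 (weighted_pow psi phi n) /\ H2n (weighted_pow psi phi n) <= s ^ n * H2n psi.
Proof.
  apply (H2_mult_comp (fun w => Cpow w n)); [| apply pow_le; lra |].
  - intros z _. apply holo_at_pow, holo_at_id.
  - intros w Hw. rewrite Cmod_pow. apply pow_incr. split; [apply Cmod_ge_0 | exact Hw].
Qed.

Section Radius.

Variable r : R.
Hypothesis r_range : s < r < 1.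

Lemma ratio_range : 0 <= s / r < 1.
Proof.
  split; [apply Rdiv_le_0_compat; lra|].
  apply Rmult_lt_reg_r with r; [lra|]. unfold Rdiv. rewrite Rmult_assoc, Rinv_l by lra. lra.
Qed.

Lemma Rabs_ratio_lt_1 : Rabs (s / r) < 1.
Proof. pose proof ratio_range. rewrite Rabs_right; lra. Qed.

Lemma nuclear_term_bound (n : nat) :
  0 <= real (fnorm (fun f => taylor_coef f r n)) * H2n (weighted_pow psi phi n)
    <= H2n psi * (s / r) ^ n.
Proof.
  destruct (fnorm_taylor_coef r n ltac:(lra)) as [F1 F2]. destruct (weighted_pow_H2 n) as [_ Y].
  pose proof (H2n_nonneg (weighted_pow psi phi n)).
  split; [apply Rmult_le_pos; assumption|].
  apply Rle_trans with ((/ r) ^ n * (s ^ n * H2n psi)); [apply Rmult_le_compat; assumption|].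
  unfold Rdiv. rewrite Rpow_mult_distr. right. ring.
Qed.

Lemma ex_series_geom_bound : ex_series (fun n => H2n psi * (s / r) ^ n).
Proof.
  apply (@ex_series_scal_l R_AbsRing R_NormedModule (H2n psi) (fun n => (s / r) ^ n)).
  apply ex_series_geom, Rabs_ratio_lt_1.
Qed.

Lemma wcomp_taylor_remainder_lim (f : C -> C) : in_H2 f ->
  is_lim_seq (fun N => H2n (fun z => Cminus (wcomp_op psi phi f z)
    (psum (fun k => Cmult (taylor_coef f r k) (weighted_pow psi phi k z)) N))) 0.
Proof.
  intros Hf. destruct (taylor_tail_bound f s r (proj1 Hf) ltac:(lra) ltac:(lra)) as [M [HM KM]].
  set (K := H2n psi * (M * (r / (r - s)))).
  assert (Hq := ratio_range).
  apply (is_lim_seq_le_le (fun _ => 0) _ (fun N => K * (s / r) ^ N)).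
  - intros N. split; [apply H2n_nonneg|].
    set (gN := fun w => (f w - psum (fun k => taylor_coef f r k * Cpow w k)%C N)%C).
    replace (fun z => _) with (fun z => (psi z * gN (phi z))%C).
    + destruct (H2_mult_comp gN (M * ((s / r) ^ N * (r / (r - s))))) as [_ G].
      * intros z Hz. apply holo_at_minus; [apply Hf, Hz | apply holo_at_poly].
      * apply Rmult_le_pos; [exact HM | apply Rmult_le_pos; [apply pow_le; lra | apply Rdiv_le_0_compat; lra]].
      * intros w Hw. apply KM, Hw.
      * eapply Rle_trans; [exact G|]. unfold K. right. ring.
    + apply functional_extensionality. intros z. unfold wcomp_op, weighted_pow, gN.
      rewrite (psum_ext (fun k => Cmult (taylor_coef f r k) (psi z * Cpow (phi z) k))
                        (fun k => psi z * (taylor_coef f r k * Cpow (phi z) k))%C) by (intros; ring).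
      rewrite <- psum_scal. ring.
  - apply is_lim_seq_const.
  - replace (Finite 0) with (Rbar_mult K 0) by apply Rbar_mult_0_r.
    apply is_lim_seq_scal_l, is_lim_seq_geom, Rabs_ratio_lt_1.
Qed.

Lemma nuclear_rep_taylor :
  nuclear_rep (wcomp_op psi phi) (fun n f => taylor_coef f r n) (weighted_pow psi phi).
Proof.
  split; [|split; [|split; [|split]]].
  - intros n. apply H2_functional_taylor_coef. lra.
  - intros n. apply weighted_pow_H2.
  - apply (@ex_series_le R_AbsRing R_CompleteNormedModule _ (fun n => H2n psi * (s / r) ^ n));
      [|exact ex_series_geom_bound].
    intros n. change (norm ?x) with (Rabs x). destruct (nuclear_term_bound n). rewrite Rabs_right; lra.
  - intros f Hf. destruct (bounded_on_subdisk f s (proj1 Hf) s_range) as [B [HB KB]].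
    apply (H2_mult_comp f B); auto. apply Hf.
  - apply wcomp_taylor_remainder_lim.
Qed.

Lemma nuclear_series_taylor_le :
  Series (fun n => real (fnorm (fun f => taylor_coef f r n)) * H2n (weighted_pow psi phi n))
  <= H2n psi / (1 - s / r).
Proof.
  apply Rle_trans with (Series (fun n => H2n psi * (s / r) ^ n)).
  - apply Series_le; [apply nuclear_term_bound | exact ex_series_geom_bound].
  - rewrite Series_scal_l, (is_series_unique (pow (s / r)) _ (is_series_geom (s / r) Rabs_ratio_lt_1)).
    right. reflexivity.
Qed.

End Radius.

Lemma nuclear_wcomp : nuclear (wcomp_op psi phi).
Proof. do 2 eexists. apply (nuclear_rep_taylor ((1 + s) / 2)). lra. Qed.

End WeightedComposition.

Lemma comp_op_wcomp_1 (phi : C -> C) : comp_op phi = wcomp_op (fun _ => RtoC 1) phi.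
Proof. do 2 (apply functional_extensionality; intros). symmetry. apply Cmult_1_l. Qed.

Lemma le_div_one_minus (H s x : R) : 0 <= H -> 0 <= s < 1 ->
  (forall r, s < r < 1 -> x <= H / (1 - s / r)) -> x <= H / (1 - s).
Proof.
  intros HH Hs Hx. apply Rnot_lt_le. intros Hlt.
  assert (Hx1 : H < x * (1 - s)).
  { apply Rmult_lt_compat_r with (r := 1 - s) in Hlt; [|lra].
    unfold Rdiv in Hlt. rewrite Rmult_assoc, Rinv_l, Rmult_1_r in Hlt by lra. exact Hlt. }
  assert (HxH : 0 < x - H) by nra.
  (* Any [r] with [x s / (x - H) < r < 1] violates the hypothesis. *)
  set (q := x * s / (x - H)).
  assert (Hq : s <= q < 1).
  { unfold q, Rdiv. split; [apply Rmult_le_reg_r with (x - H) | apply Rmult_lt_reg_r with (x - H)];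
      try lra; rewrite Rmult_assoc, Rinv_l, Rmult_1_r by lra; nra. }
  set (r := (q + 1) / 2).
  assert (Hr : s < r < 1) by (unfold r; lra).
  specialize (Hx r Hr).
  replace (H / (1 - s / r)) with (H * r / (r - s)) in Hx by (field; lra).
  assert (H * r < x * (r - s)).
  { assert (q * (x - H) = x * s) by (unfold q; field; lra).
    assert (q < r) by (unfold r; lra). nra. }
  apply Rmult_le_compat_r with (r := r - s) in Hx; [|lra].
  unfold Rdiv in Hx. rewrite Rmult_assoc, Rinv_l, Rmult_1_r in Hx by lra. lra.
Qed.

Lemma sup_disk_lt_1 (phi : C -> C) : Rbar_lt (sup_disk phi) 1 ->
  exists s, sup_disk phi = Finite s /\ 0 <= s < 1 /\ forall z, in_disk z -> Cmod (phi z) <= s.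
Proof.
  intros H. unfold sup_disk in *.
  destruct (Lub_Rbar_correct (fun x => exists z : C, in_disk z /\ x = Cmod (phi z))) as [Hub _].
  assert (D0 : in_disk (RtoC 0)) by (unfold in_disk; rewrite Cmod_0; lra).
  assert (H0 := Hub _ (ex_intro _ (RtoC 0) (conj D0 eq_refl))).
  pose proof (Cmod_ge_0 (phi (RtoC 0))).
  destruct (Lub_Rbar _) as [s| |]; simpl in *; try contradiction.
  exists s. split; [reflexivity|]. split; [lra|]. intros z Hz. apply Hub. exists z. auto.
Qed.

Lemma nuclear_norm_wcomp_le (psi phi : C -> C) (s : R) :
  in_H2 psi -> holomorphic_on_disk phi -> (forall z, in_disk z -> Cmod (phi z) <= s) -> 0 <= s < 1 ->
  Rbar_le (nuclear_norm (wcomp_op psi phi)) (H2n psi / (1 - s)).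
Proof.
  intros Hpsi Hphi Hle Hs. unfold nuclear_norm.
  set (E := fun x => exists L y, nuclear_rep (wcomp_op psi phi) L y /\
                       x = Series (fun n => real (fnorm (L n)) * H2n (y n))).
  destruct (Glb_Rbar_correct E) as [Hlb _].
  assert (B : forall r, s < r < 1 -> Rbar_le (Glb_Rbar E) (H2n psi / (1 - s / r))).
  { intros r Hr. eapply Rbar_le_trans; [apply Hlb; do 2 eexists; split;
      [apply (nuclear_rep_taylor psi phi s Hpsi Hphi Hle Hs r Hr) | reflexivity]|].
    apply nuclear_series_taylor_le; assumption. }
  destruct (Glb_Rbar E) as [x| |]; simpl in *.
  - apply le_div_one_minus; [apply H2n_nonneg | exact Hs |]. intros r Hr. apply (B r Hr).
  - apply (B ((1 + s) / 2)). lra.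
  - exact I.
Qed.

Theorem mainTheorem8 (psi phi : C -> C) :
  in_H2 psi ->
  holomorphic_on_disk phi ->
  (forall z : C, in_disk z -> in_disk (phi z)) ->
  Rbar_lt (sup_disk phi) 1 ->
  nuclear (wcomp_op psi phi) /\ nuclear (comp_op phi) /\
  Rbar_le (nuclear_norm (wcomp_op psi phi))
          (Finite (H2n psi / (1 - real (sup_disk phi)))).
Proof.
  (* The mapping hypothesis is implied by [sup_disk phi < 1]. *)
  intros Hpsi Hphi _ Hsup.
  destruct (sup_disk_lt_1 phi Hsup) as [s [-> [Hs Hle]]]. simpl.
  split; [|split].
  - exact (nuclear_wcomp psi phi s Hpsi Hphi Hle Hs).
  - rewrite comp_op_wcomp_1. exact (nuclear_wcomp _ phi s (proj1 (in_H2_const _)) Hphi Hle Hs).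
  - exact (nuclear_norm_wcomp_le psi phi s Hpsi Hphi Hle Hs).
Qed.
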